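(* Let $X=\varprojlim X_np_n$ be a reduced regular projective limit of Fréchet lattices $X_n$, endowed with the projective limit topology, let $X_0\subset X$ be a vector subspace, $q_1\colon X_1\to\mathbb R$ a positive linear functional, $q:=q_1\circ\operatorname{pr}_1$, and $H\subset X$ a sequentially closed convex cone containing a vector $h\le0$. Suppose that for each $n\in\mathbb N$ one of the following holds: (i) $H_n:=\operatorname{pr}_nH$ is minorizing for $\operatorname{pr}_nX_0$; (ii) the sup-projection $f_n(x_n)=\sup\{\mathrm{spf}_{H,q}(x):\ x\in X,\ \operatorname{pr}_nx=x_n\}$ is upper semicontinuous on $\operatorname{pr}_nX_0$ (with the topology induced from $X_n$); and moreover (iii) for every at most countable subset $B\subset H$ which is bounded above in $X$ and satisfies $\inf q(B)>-\infty$ there is $n_q\in\mathbb N$ such that $\operatorname{pr}_nB$ is sequentially precompact in $X_n$ for every $n\ge n_q$. Then $\mathrm{spf}_{H,q}$ is a positive superlinear function with values in $\mathbb R\cup\{-\infty\}$ and for all $x\in X_0$ $$\mathrm{spf}_{H,q}(x)=\inf\{l(x):\ l\colon X_0\to\mathbb R\ \text{positive linear},\ q(h)\le l(x')\ \text{for all }h\in H,\ x'\in X_0,\ h\le x'\}.$$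
   Context: All vector spaces are real. Projective limit: for ordered vector spaces $(X_n,\le_n)$ and positive linear $p_n\colon X_{n+1}\to X_n$, $X=\varprojlim X_np_n=\{x=(x_n)\in\prod X_n:\ x_n=p_n(x_{n+1})\ \forall n\}$ with coordinatewise order, $\operatorname{pr}_nx=x_n$; regular if all $X_n$ are vector lattices and each $p_n$ preserves suprema of finite sets; reduced if $\operatorname{pr}_nX=X_n$ for all $n$. A Fréchet lattice is a vector lattice which is a Fréchet space having a base of zero neighbourhoods $V$ such that $x\in V$, $|x'|\le|x|$ imply $x'\in V$ ($|x|=\sup\{x,-x\}$). The projective limit topology on $X$ is the one induced from the product topology of $\prod_nX_n$. A set is sequentially closed if it contains limits of its convergent sequences; sequentially precompact if every sequence in it has a convergent subsequence. Minorizing: every $y\in\operatorname{pr}_nX_0$ has $h\in H_n$ with $h\le_ny$. Supremal function: $\mathrm{spf}_{H,q}(x)=\sup\{q(h):\ h\in H,\ h\le x\}$, $\sup\varnothing=-\infty$. Superlinear: superadditive, $g(tx)=tg(x)$ for $t>0$, $g(0)$ finite; positive: $g(x)\ge0$ for $x\ge0$. *)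

From Stdlib Require Import Reals Lra ClassicalEpsilon.
Open Scope R_scope.

Inductive ER : Type := Fin (r : R) | PInf | MInf.

Definition Ele (a b : ER) : Prop :=
  match a, b with
  | MInf, _ => True
  | _, PInf => True
  | Fin x, Fin y => x <= y
  | _, _ => False
  end.

Definition Elt (a b : ER) : Prop := Ele a b /\ a <> b.

(* addition, used only where +oo does not occur; -oo is absorbing *)
Definition Eadd (a b : ER) : ER :=
  match a, b with
  | Fin x, Fin y => Fin (x + y)
  | MInf, _ | _, MInf => MInf
  | _, _ => PInf
  end.

(* multiplication by a real scalar t > 0 *)
Definition Escal (t : R) (a : ER) : ER :=
  match a with
  | Fin x => Fin (t * x)
  | PInf => PInf
  | MInf => MInf
  end.

Definition is_Esup (S : ER -> Prop) (s : ER) : Prop :=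
  (forall a, S a -> Ele a s) /\ (forall b, (forall a, S a -> Ele a b) -> Ele s b).
Definition is_Einf (S : ER -> Prop) (s : ER) : Prop :=
  (forall a, S a -> Ele s a) /\ (forall b, (forall a, S a -> Ele b a) -> Ele b s).

(* supremum / infimum in the complete lattice ER (sup of empty set = -oo) *)
Definition Esup (S : ER -> Prop) : ER := epsilon (inhabits MInf) (is_Esup S).
Definition Einf (S : ER -> Prop) : ER := epsilon (inhabits PInf) (is_Einf S).

Record VLat : Type := {
  vcar :> Type;
  vzero : vcar;
  vadd : vcar -> vcar -> vcar;
  vopp : vcar -> vcar;
  vscal : R -> vcar -> vcar;
  vle : vcar -> vcar -> Prop;
  vjoin : vcar -> vcar -> vcar;
  vaddA : forall x y z, vadd x (vadd y z) = vadd (vadd x y) z;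
  vaddC : forall x y, vadd x y = vadd y x;
  vadd0 : forall x, vadd x vzero = x;
  vaddN : forall x, vadd x (vopp x) = vzero;
  vscal1 : forall x, vscal 1 x = x;
  vscalA : forall a b x, vscal a (vscal b x) = vscal (a * b) x;
  vscalDr : forall a x y, vscal a (vadd x y) = vadd (vscal a x) (vscal a y);
  vscalDl : forall a b x, vscal (a + b) x = vadd (vscal a x) (vscal b x);
  vle_refl : forall x, vle x x;
  vle_antisym : forall x y, vle x y -> vle y x -> x = y;
  vle_trans : forall x y z, vle x y -> vle y z -> vle x z;
  vle_add : forall x y z, vle x y -> vle (vadd x z) (vadd y z);
  vle_scal : forall t x y, 0 <= t -> vle x y -> vle (vscal t x) (vscal t y);
  vjoin_l : forall x y, vle x (vjoin x y);
  vjoin_r : forall x y, vle y (vjoin x y);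
  vjoin_lub : forall x y z, vle x z -> vle y z -> vle (vjoin x y) z
}.

Arguments vzero {v}.
Arguments vadd {v}.
Arguments vopp {v}.
Arguments vscal {v}.
Arguments vle {v}.
Arguments vjoin {v}.

Definition vsub {V : VLat} (x y : V) : V := vadd x (vopp y).
Definition vabs {V : VLat} (x : V) : V := vjoin x (vopp x).

(* Frechet lattices: a vector lattice with a Hausdorff, complete,      *)
(* metrizable locally convex topology having a base of solid zero     *)
(* neighbourhoods; equivalently the topology is generated by a        *)
(* countable separating family of Riesz (lattice) seminorms sn j and  *)
(* is complete.                                                       *)
Record FLat : Type := {
  flat :> VLat;
  sn : nat -> flat -> R;
  sn_triangle : forall j x y, sn j (vadd x y) <= sn j x + sn j y;
  sn_homog : forall j t x, sn j (vscal t x) = Rabs t * sn j x;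
  sn_solid : forall j x y, vle (vabs x) (vabs y) -> sn j x <= sn j y;
  sn_sep : forall x, (forall j, sn j x = 0) -> x = vzero;
  sn_complete : forall u : nat -> flat,
    (forall j eps, 0 < eps -> exists N, forall m k, (N <= m)%nat -> (N <= k)%nat ->
        sn j (vsub (u m) (u k)) < eps) ->
    exists x, forall j eps, 0 < eps -> exists N, forall k, (N <= k)%nat ->
        sn j (vsub (u k) x) < eps
}.

Arguments sn {f}.

Definition fconv {V : FLat} (u : nat -> V) (x : V) : Prop :=
  forall j eps, 0 < eps -> exists N, forall k, (N <= k)%nat -> sn j (vsub (u k) x) < eps.

Definition in_nbhd {V : FLat} (j : nat) (eps : R) (y z : V) : Prop :=
  forall i, (i <= j)%nat -> sn i (vsub z y) < eps.

Definition usc_on {V : FLat} (A : V -> Prop) (f : V -> ER) : Prop :=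
  forall y, A y -> forall t : R, Elt (f y) (Fin t) ->
    exists j eps, 0 < eps /\ forall z, A z -> in_nbhd j eps y z -> Elt (f z) (Fin t).

Definition seq_precompact {V : FLat} (A : V -> Prop) : Prop :=
  forall u : nat -> V, (forall k, A (u k)) ->
    exists (phi : nat -> nat) (x : V),
      (forall k, (phi k < phi (S k))%nat) /\ fconv (fun k => u (phi k)) x.

Definition linear_map {V W : VLat} (f : V -> W) : Prop :=
  (forall x y, f (vadd x y) = vadd (f x) (f y)) /\
  (forall t x, f (vscal t x) = vscal t (f x)).

Definition positive_map {V W : VLat} (f : V -> W) : Prop :=
  forall x, vle vzero x -> vle vzero (f x).

(* Projective limits (indices start at 0: X 0, X 1, ...)              *)
Definition Prod (X : nat -> FLat) : Type := forall n, X n.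

Section Proj.
Variable X : nat -> FLat.
Variable p : forall n, X (S n) -> X n.

Definition in_lim (x : Prod X) : Prop := forall n, x n = p n (x (S n)).

Definition pzero : Prod X := fun n => vzero.
Definition padd (x y : Prod X) : Prod X := fun n => vadd (x n) (y n).
Definition pscal (t : R) (x : Prod X) : Prod X := fun n => vscal t (x n).
Definition ple (x y : Prod X) : Prop := forall n, vle (x n) (y n).

(* convergence in the product (= projective limit) topology *)
Definition pconv (u : nat -> Prod X) (x : Prod X) : Prop :=
  forall n, fconv (fun k => u k n) (x n).

Definition regular_lim : Prop :=
  forall n (x y : X (S n)), p n (vjoin x y) = vjoin (p n x) (p n y).

Definition reduced_lim : Prop :=
  forall n (y : X n), exists x, in_lim x /\ x n = y.

Definition subspace (A : Prod X -> Prop) : Prop :=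
  (forall x, A x -> in_lim x) /\ A pzero /\
  (forall x y, A x -> A y -> A (padd x y)) /\
  (forall t x, A x -> A (pscal t x)).

Definition convex_cone (A : Prod X -> Prop) : Prop :=
  (forall x, A x -> in_lim x) /\
  (forall t x, 0 < t -> A x -> A (pscal t x)) /\
  (forall t x y, 0 <= t <= 1 -> A x -> A y -> A (padd (pscal t x) (pscal (1 - t) y))).

Definition seq_closed (A : Prod X -> Prop) : Prop :=
  forall (u : nat -> Prod X) x, (forall k, A (u k)) -> in_lim x -> pconv u x -> A x.

Definition proj (n : nat) (A : Prod X -> Prop) : X n -> Prop :=
  fun y => exists x, A x /\ x n = y.

Definition minorizing (n : nat) (H X0 : Prod X -> Prop) : Prop :=
  forall y, proj n X0 y -> exists h, proj n H h /\ vle h y.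

Definition spf (H : Prod X -> Prop) (q : Prod X -> R) (x : Prod X) : ER :=
  Esup (fun a => exists h, H h /\ ple h x /\ a = Fin (q h)).

Definition sup_proj (H : Prod X -> Prop) (q : Prod X -> R) (n : nat) (y : X n) : ER :=
  Esup (fun a => exists x, in_lim x /\ x n = y /\ a = spf H q x).

Definition at_most_countable (B : Prod X -> Prop) : Prop :=
  exists g : nat -> Prod X, forall b, B b -> exists k, g k = b.

Definition superlinear_pos (g : Prod X -> ER) : Prop :=
  (forall x, in_lim x -> g x <> PInf) /\
  (forall x y, in_lim x -> in_lim y -> Ele (Eadd (g x) (g y)) (g (padd x y))) /\
  (forall t x, 0 < t -> in_lim x -> g (pscal t x) = Escal t (g x)) /\
  (exists r, g pzero = Fin r) /\
  (forall x, in_lim x -> ple pzero x -> Ele (Fin 0) (g x)).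

End Proj.

(** Superlinearity of spf is inherited from the convex cone H, which contains 0
    because it is sequentially closed and nonempty (so h/k -> 0 lies in it).
    For the duality formula, spf(x) <= l(x) for every admissible l is trivial.
    Conversely let spf(x) < t < r.  A compactness argument gives a level n with
    q(h) < t whenever h in H and pr_n h <= pr_n x: otherwise choose such h_n with
    q(h_n) >= t; by regularity the h_n have a common upper bound in X, so by (iii)
    and a diagonal argument a subsequence converges in X to some h in H with
    h <= x and q(h) >= t, using that positive linear maps between Fréchet lattices
    are continuous.  Then a superlinear G on X0 with G(x) <= r and G >= q on
    {h in H : h <= y} is built: under (i), G(y) = sup {q(h) : pr_n h <= pr_n y};
    under (ii), G(y) = sup {q(h) - M rho(pr_n y - pr_n z) : pr_n h <= pr_n z, z in X0}
    for a continuous seminorm rho of X_n and M large, upper semicontinuity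
    controlling z near x and the continuity of q on X_n controlling z far from x.
    A Hahn-Banach extension (by Zorn's lemma) yields a linear l >= G on X0 with
    l(x) = G(x) <= r. *)
From mathcomp Require classical_sets boolp.
From Stdlib Require Import Reals Lra Lia Classical ClassicalEpsilon FunctionalExtensionality PropExtensionality.
Open Scope R_scope.

(** * Extended reals *)

Lemma Ele_refl a : Ele a a.
Proof. destruct a; simpl; auto; lra. Qed.
Lemma Ele_trans a b c : Ele a b -> Ele b c -> Ele a c.
Proof. destruct a, b, c; simpl; auto; try lra; tauto. Qed.
Lemma Ele_antisym a b : Ele a b -> Ele b a -> a = b.
Proof. destruct a, b; simpl; try tauto; intros; f_equal; lra. Qed.
Lemma Ele_total a b : Ele a b \/ Ele b a.
Proof. destruct a, b; simpl; auto. lra. Qed.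
Lemma Ele_of_not_Elt a b : ~ Elt a b -> Ele b a.
Proof.
intros H. destruct (Ele_total a b) as [h|h]; auto.
destruct (classic (a = b)) as [e|e]. subst; apply Ele_refl. exfalso; apply H; split; auto.
Qed.
Lemma Ele_Elt_trans a b c : Ele a b -> Elt b c -> Elt a c.
Proof. intros H1 [H2 H3]. split. eapply Ele_trans; eauto. intros E. subst. apply H3. apply Ele_antisym; auto. Qed.
Lemma Elt_Fin x y : Elt (Fin x) (Fin y) -> x < y.
Proof. intros [H1 H2]. simpl in H1. destruct (Req_dec x y). subst. exfalso; auto. lra. Qed.

Lemma Ele_of_forall_Elt a b : a <> PInf -> (forall r, Elt a (Fin r) -> Ele b (Fin r)) -> Ele b a.
Proof.
intros Ha Hr. assert (Elt_lt : forall x y, x < y -> Elt (Fin x) (Fin y)).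
{ intros x y Hxy. split. simpl; lra. intros E; injection E; lra. }
destruct a as [s| |]; [|contradiction|].
- destruct b as [e| |]; simpl; auto.
  + apply Rnot_lt_le. intros Hlt. assert (Hm : s < (s + e) / 2) by lra.
    specialize (Hr _ (Elt_lt _ _ Hm)). simpl in Hr. lra.
  + apply (Hr (s + 1)), Elt_lt. lra.
- destruct b as [e| |]; simpl; auto.
  + assert (e <= e - 1); [|lra]. apply (Hr (e - 1)). split; simpl; auto. discriminate.
  + apply (Hr 0). split; simpl; auto. discriminate.
Qed.

Lemma Escal_mono t a b : 0 < t -> Ele a b -> Ele (Escal t a) (Escal t b).
Proof. intros Ht. destruct a, b; simpl; auto. intros; apply Rmult_le_compat_l; lra. Qed.
Lemma Escal_inv t e : 0 < t -> Escal t (Escal (/t) e) = e.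
Proof. intros Ht. destruct e; simpl; auto. f_equal. field. lra. Qed.

Lemma is_Esup_exists (S : ER -> Prop) : exists s, is_Esup S s.
Proof.
destruct (classic (S PInf)) as [HP|HP].
{ exists PInf. split. intros a _; destruct a; simpl; auto.
  intros b Hb. apply Hb; auto. }
set (A := fun r => S (Fin r)).
destruct (classic (exists r, A r)) as [Hne|Hne].
- destruct (classic (bound A)) as [Hb|Hb].
  + destruct (completeness A Hb Hne) as [m [Hm1 Hm2]]. unfold is_upper_bound in Hm1.
    exists (Fin m). split.
    * intros a Ha. destruct a; simpl. apply Hm1; exact Ha. contradiction. auto.
    * intros b Hb2. destruct b; simpl; auto.
      -- apply Hm2. intros x Hx. specialize (Hb2 _ Hx). simpl in Hb2. exact Hb2.
      -- destruct Hne as [r Hr]. specialize (Hb2 _ Hr). simpl in Hb2. exact Hb2.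
  + exists PInf. split. intros a _; destruct a; simpl; auto.
    intros b Hb2. destruct b; simpl; auto.
    * exfalso. apply Hb. exists r. intros x Hx. specialize (Hb2 _ Hx). simpl in Hb2. exact Hb2.
    * destruct Hne as [r Hr]. specialize (Hb2 _ Hr). simpl in Hb2. exact Hb2.
- exists MInf. split.
  + intros a Ha. destruct a; simpl. apply Hne. exists r; exact Ha. contradiction. auto.
  + intros b _. simpl; auto.
Qed.

Lemma Esup_ub S a : S a -> Ele a (Esup S).
Proof. intros H. apply (proj1 (epsilon_spec _ _ (is_Esup_exists S))); auto. Qed.
Lemma Esup_lub S b : (forall a, S a -> Ele a b) -> Ele (Esup S) b.
Proof. intros H. apply (proj2 (epsilon_spec _ _ (is_Esup_exists S))); auto. Qed.

Lemma is_Einf_exists (S : ER -> Prop) : exists s, is_Einf S s.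
Proof.
destruct (is_Esup_exists (fun b => forall a, S a -> Ele b a)) as [s [H1 H2]].
exists s. split.
- intros a Ha. apply H2. intros b Hb. apply Hb; auto.
- intros b Hb. apply H1. exact Hb.
Qed.
Lemma Einf_lb S a : S a -> Ele (Einf S) a.
Proof. intros H. apply (proj1 (epsilon_spec _ _ (is_Einf_exists S))); auto. Qed.
Lemma Einf_glb S b : (forall a, S a -> Ele b a) -> Ele b (Einf S).
Proof. intros H. apply (proj2 (epsilon_spec _ _ (is_Einf_exists S))); auto. Qed.

Definition Rsup (A : R -> Prop) : ER := Esup (fun e => exists a, A a /\ e = Fin a).

Lemma Rsup_ub A a : A a -> Ele (Fin a) (Rsup A).
Proof. intros H. apply Esup_ub. exists a; auto. Qed.
Lemma Rsup_lub A b : (forall a, A a -> Ele (Fin a) b) -> Ele (Rsup A) b.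
Proof. intros H. apply Esup_lub. intros e [a [Ha ->]]. auto. Qed.
Lemma Rsup_le A c : (forall a, A a -> a <= c) -> Ele (Rsup A) (Fin c).
Proof. intros H. apply Rsup_lub. intros a Ha. simpl. auto. Qed.
Lemma Rsup_not_PInf A c : (forall a, A a -> a <= c) -> Rsup A <> PInf.
Proof. intros H E. pose proof (Rsup_le A c H) as H0. rewrite E in H0. exact H0. Qed.
Lemma Rsup_not_MInf A a : A a -> Rsup A <> MInf.
Proof. intros Ha E. pose proof (Rsup_ub A a Ha) as H. rewrite E in H. exact H. Qed.

Lemma Rsup_lt A r : Elt (Rsup A) (Fin r) -> exists t, t < r /\ forall a, A a -> a <= t.
Proof.
intros [H1 H2]. destruct (Rsup A) eqn:E; simpl in H1.
- exists r0. split. assert (r0 <> r) by (intro; subst; auto). lra.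
  intros a Ha. pose proof (Rsup_ub A a Ha) as H0. rewrite E in H0. exact H0.
- contradiction.
- exists (r - 1). split. lra. intros a Ha. pose proof (Rsup_ub A a Ha) as H0. rewrite E in H0. contradiction.
Qed.
Lemma Rsup_ge A r : (forall t, t < r -> exists a, A a /\ t <= a) -> Ele (Fin r) (Rsup A).
Proof.
intros H. apply Ele_of_not_Elt. intros Hlt. destruct (Rsup_lt A r Hlt) as [t [Ht1 Ht2]].
destruct (H ((t + r)/2)) as [a [Ha1 Ha2]]. lra. specialize (Ht2 a Ha1). lra.
Qed.
Lemma Rsup_approx A s : Rsup A = Fin s -> forall eps, 0 < eps -> exists a, A a /\ s - eps < a.
Proof.
intros E eps He. apply NNPP. intros Hn.
assert (Hle : Ele (Rsup A) (Fin (s - eps))).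
{ apply Rsup_le. intros a Ha. apply Rnot_lt_le. intros Hl. apply Hn. exists a; auto. }
rewrite E in Hle. simpl in Hle. lra.
Qed.
Lemma Rsup_fin A c : (exists a, A a) -> (forall a, A a -> a <= c) ->
  exists s, Rsup A = Fin s /\ (forall a, A a -> a <= s).
Proof.
intros [a0 Ha0] Hc. destruct (Rsup A) eqn:E.
- exists r. split; auto. intros a Ha. pose proof (Rsup_ub A a Ha) as H. rewrite E in H. exact H.
- exfalso. apply (Rsup_not_PInf A c Hc E).
- exfalso. apply (Rsup_not_MInf A a0 Ha0 E).
Qed.

Lemma Rsup_add (A B C : R -> Prop) cA cB : (forall a, A a -> a <= cA) -> (forall b, B b -> b <= cB) ->
  (forall a b, A a -> B b -> exists c, C c /\ a + b <= c) -> Ele (Eadd (Rsup A) (Rsup B)) (Rsup C).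
Proof.
intros HA HB HC. destruct (Rsup A) eqn:EA.
- destruct (Rsup B) eqn:EB.
  + simpl. apply Rsup_ge. intros t Ht.
    destruct (Rsup_approx A r EA ((r + r0 - t)/2)) as [a [Ha1 Ha2]]. lra.
    destruct (Rsup_approx B r0 EB ((r + r0 - t)/2)) as [b [Hb1 Hb2]]. lra.
    destruct (HC a b Ha1 Hb1) as [c [Hc1 Hc2]]. exists c. split; auto. lra.
  + exfalso. apply (Rsup_not_PInf B cB HB EB).
  + simpl. auto.
- exfalso. apply (Rsup_not_PInf A cA HA EA).
- simpl. auto.
Qed.

Lemma Rsup_scal_le (A B : R -> Prop) t : 0 < t -> (forall b, B b -> exists a, A a /\ b <= t * a) ->
  Ele (Rsup B) (Escal t (Rsup A)).
Proof.
intros Ht HB. apply Rsup_lub. intros b Hb. destruct (HB b Hb) as [a [Ha Hab]].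
apply Ele_trans with (Escal t (Fin a)). simpl. exact Hab.
apply Escal_mono; auto. apply Rsup_ub; auto.
Qed.
Lemma Rsup_scal (A B : R -> Prop) t : 0 < t -> (forall b, B b -> exists a, A a /\ b <= t * a) ->
  (forall a, A a -> exists b, B b /\ a <= /t * b) -> Rsup B = Escal t (Rsup A).
Proof.
intros Ht H1 H2. apply Ele_antisym. apply Rsup_scal_le; auto.
rewrite <- (Escal_inv t (Rsup B)) by auto. apply Escal_mono; auto. apply Rsup_scal_le; auto.
apply Rinv_0_lt_compat; auto.
Qed.

(** * Vector lattices *)

Section VectorLattice.
Context {V : VLat}.
Implicit Types x y z a b c d : V.

Lemma vadd0l x : vadd vzero x = x.
Proof. rewrite vaddC. apply vadd0. Qed.
Lemma vaddNl x : vadd (vopp x) x = vzero.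
Proof. rewrite vaddC. apply vaddN. Qed.
Lemma vadd_cancel x y z : vadd x z = vadd y z -> x = y.
Proof. intros H. rewrite <- (vadd0 V x), <- (vadd0 V y), <- (vaddN V z), !vaddA, H. reflexivity. Qed.
Lemma vscal0 x : vscal 0 x = vzero.
Proof. apply (vadd_cancel _ _ (vscal 0 x)). rewrite vadd0l, <- vscalDl. f_equal; ring. Qed.
Lemma vscal_zero t : vscal t (@vzero V) = vzero.
Proof. rewrite <- (vscal0 vzero), vscalA. f_equal. ring. Qed.
Lemma vopp_scal x : vopp x = vscal (-1) x.
Proof.
apply (vadd_cancel _ _ x). rewrite vaddNl.
transitivity (vadd (vscal (-1) x) (vscal 1 x)).
- rewrite <- vscalDl. replace (-1+1) with 0 by ring. symmetry; apply vscal0.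
- rewrite vscal1. reflexivity.
Qed.
Lemma vscal_opp t x : vscal t (vopp x) = vscal (-t) x.
Proof. rewrite vopp_scal, vscalA. f_equal; ring. Qed.
Lemma vopp_vopp x : vopp (vopp x) = x.
Proof. rewrite !vopp_scal, vscalA. replace (-1 * -1) with 1 by ring. apply vscal1. Qed.
Lemma vopp_add x y : vopp (vadd x y) = vadd (vopp x) (vopp y).
Proof. rewrite !vopp_scal. apply vscalDr. Qed.
Lemma vopp_zero : vopp (@vzero V) = vzero.
Proof. rewrite vopp_scal. apply vscal_zero. Qed.
Lemma vsub_add x y : vadd (vsub x y) y = x.
Proof. unfold vsub. rewrite <- vaddA, vaddNl, vadd0. reflexivity. Qed.
Lemma vadd_sub x y : vsub (vadd x y) y = x.
Proof. unfold vsub. rewrite <- vaddA, vaddN, vadd0. reflexivity. Qed.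
Lemma vsub_self x : vsub x x = vzero.
Proof. apply vaddN. Qed.
Lemma vsub0 x : vsub x vzero = x.
Proof. unfold vsub. rewrite vopp_zero. apply vadd0. Qed.
Lemma vadd_swap a b c d : vadd (vadd a b) (vadd c d) = vadd (vadd a c) (vadd b d).
Proof. rewrite <- !vaddA. f_equal. rewrite !vaddA. f_equal. apply vaddC. Qed.
Lemma vsub_addsub a b c d : vsub (vadd a b) (vadd c d) = vadd (vsub a c) (vsub b d).
Proof. unfold vsub. rewrite vopp_add. apply vadd_swap. Qed.
Lemma vscal_sub t a b : vscal t (vsub a b) = vsub (vscal t a) (vscal t b).
Proof. unfold vsub. rewrite vscalDr, vscal_opp, vopp_scal, vscalA. f_equal. f_equal. ring. Qed.
Lemma vsub_opp x y : vopp (vsub x y) = vsub y x.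
Proof. unfold vsub. rewrite vopp_add, vopp_vopp. apply vaddC. Qed.

Lemma vle_add2 a b c d : vle a b -> vle c d -> vle (vadd a c) (vadd b d).
Proof.
intros H1 H2. apply vle_trans with (vadd b c). apply vle_add; auto.
rewrite (vaddC V b c), (vaddC V b d). apply vle_add; auto.
Qed.
Lemma vle_addl a b c : vle a b -> vle (vadd c a) (vadd c b).
Proof. intros H. rewrite (vaddC V c a), (vaddC V c b). apply vle_add; auto. Qed.
Lemma vle_add_cancel a b c : vle (vadd a c) (vadd b c) -> vle a b.
Proof. intros H. rewrite <- (vadd_sub a c), <- (vadd_sub b c). apply vle_add. exact H. Qed.
Lemma vle_subr_ge0 a b : vle a b -> vle vzero (vsub b a).
Proof. intros H. rewrite <- (vsub_self a). apply vle_add. exact H. Qed.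
Lemma vsubr_ge0_le a b : vle vzero (vsub b a) -> vle a b.
Proof. intros H. rewrite <- (vsub_add b a). rewrite <- (vadd0l a) at 1. apply vle_add. exact H. Qed.
Lemma vle_opp a b : vle a b -> vle (vopp b) (vopp a).
Proof.
intros H. apply vle_add_cancel with (vadd a b).
rewrite (vaddC V a b) at 1. rewrite vaddA, vaddNl, vadd0l, vaddA, vaddNl, vadd0l. exact H.
Qed.
Lemma vle_addr_ge0 a b : vle vzero b -> vle a (vadd a b).
Proof. intros H. rewrite <- (vadd0 V a) at 1. apply vle_addl. exact H. Qed.

Lemma vjoin_idPl a b : vle b a -> vjoin a b = a.
Proof. intros H. apply vle_antisym. apply vjoin_lub; auto. apply vle_refl. apply vjoin_l. Qed.
Lemma vjoin_mono a a' b : vle a a' -> vle (vjoin a b) (vjoin a' b).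
Proof. intros H. apply vjoin_lub. apply vle_trans with a'; auto. apply vjoin_l. apply vjoin_r. Qed.

Lemma vabs_ge0 x : vle vzero (vabs x).
Proof.
unfold vabs. set (j := vjoin x (vopp x)).
assert (H : vle vzero (vadd j j)).
{ rewrite <- (vaddN V x). apply vle_add2; [apply vjoin_l | apply vjoin_r]. }
rewrite <- (vscal_zero (/2)). replace j with (vscal (/2) (vadd j j)).
- apply vle_scal; auto. lra.
- rewrite <- (vscal1 V j) at 1 2. rewrite <- vscalDl, vscalA.
  replace (/2 * (1+1)) with 1 by field. apply vscal1.
Qed.
Lemma vabs_id x : vle vzero x -> vabs x = x.
Proof.
intros H. apply vjoin_idPl. apply vle_trans with vzero; auto.
rewrite <- vopp_zero. apply vle_opp. auto.
Qed.
Lemma vabs_abs x : vabs (vabs x) = vabs x.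
Proof. apply vabs_id. apply vabs_ge0. Qed.
Lemma vle_abs x : vle x (vabs x).
Proof. apply vjoin_l. Qed.
Lemma vle_opp_abs x : vle (vopp x) (vabs x).
Proof. apply vjoin_r. Qed.
End VectorLattice.

Section Seminorms.
Context {F : FLat}.
Implicit Types x y z : F.

Lemma sn_opp j x : sn j (vopp x) = sn j x.
Proof. rewrite vopp_scal, sn_homog. rewrite Rabs_left by lra. ring. Qed.
Lemma sn_zero j : sn j (@vzero F) = 0.
Proof. pose proof (sn_homog F j 0 vzero) as H. rewrite vscal0, Rabs_R0 in H. lra. Qed.
Lemma sn_ge0 j x : 0 <= sn j x.
Proof.
pose proof (sn_triangle F j x (vopp x)) as H. rewrite vaddN, sn_opp, sn_zero in H. lra.
Qed.
Lemma sn_sub_sym j x y : sn j (vsub x y) = sn j (vsub y x).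
Proof. rewrite <- vsub_opp. apply sn_opp. Qed.
Lemma sn_abs j x : sn j (vabs x) = sn j x.
Proof. apply Rle_antisym; apply sn_solid; rewrite ?vabs_abs; apply vle_refl. Qed.
Lemma sn_sub_triangle j x y z : sn j (vsub x z) <= sn j (vsub x y) + sn j (vsub y z).
Proof.
replace (vsub x z) with (vadd (vsub x y) (vsub y z)). apply sn_triangle.
unfold vsub. rewrite <- vaddA. f_equal. rewrite vaddA, vaddNl, vadd0l. reflexivity.
Qed.
End Seminorms.

(** * Fréchet lattices *)

Section FrechetLattice.
Context {E : FLat}.
Implicit Types u : nat -> E.

(* [snmax j] gauges the basic neighbourhoods [in_nbhd j]. *)
Fixpoint snmax (j : nat) (w : E) : R :=
  match j with O => sn 0 w | S i => Rmax (snmax i w) (sn (S i) w) end.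

Lemma snmax_ge j i w : (i <= j)%nat -> sn i w <= snmax j w.
Proof.
induction j; intros H; simpl.
- replace i with 0%nat by lia. lra.
- destruct (Nat.eq_dec i (S j)). subst. apply Rmax_r.
  eapply Rle_trans. apply IHj; lia. apply Rmax_l.
Qed.
Lemma snmax_ge0 j w : 0 <= snmax j w.
Proof. eapply Rle_trans. apply (sn_ge0 0%nat w). apply snmax_ge. lia. Qed.
Lemma snmax_homog j t w : snmax j (vscal t w) = Rabs t * snmax j w.
Proof.
induction j; simpl. apply sn_homog. rewrite IHj, sn_homog.
pose proof (Rabs_pos t). destruct (Req_dec (Rabs t) 0) as [E0|E0].
- rewrite E0, !Rmult_0_l. apply Rmax_left. lra.
- unfold Rmax. destruct (Rle_dec (snmax j w) (sn (S j) w)),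
    (Rle_dec (Rabs t * snmax j w) (Rabs t * sn (S j) w)); auto.
  + exfalso. apply n. apply Rmult_le_compat_l; lra.
  + exfalso. apply n. apply Rmult_le_reg_l with (Rabs t); lra.
Qed.
Lemma snmax_zero j : snmax j (@vzero E) = 0.
Proof. rewrite <- (vscal0 vzero), snmax_homog, Rabs_R0. ring. Qed.
Lemma snmax_abs j w : snmax j (vabs w) = snmax j w.
Proof. induction j; simpl. apply sn_abs. rewrite IHj, sn_abs. reflexivity. Qed.
Lemma snmax_sub_sym j x y : snmax j (vsub x y) = snmax j (vsub y x).
Proof. induction j; simpl. apply sn_sub_sym. rewrite IHj, sn_sub_sym. reflexivity. Qed.
Lemma snmax_triangle j x y : snmax j (vadd x y) <= snmax j x + snmax j y.
Proof.
induction j; simpl. apply sn_triangle. apply Rmax_lub.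
- eapply Rle_trans. apply IHj. apply Rplus_le_compat; apply Rmax_l.
- eapply Rle_trans. apply sn_triangle. apply Rplus_le_compat; apply Rmax_r.
Qed.
Lemma snmax_mono j j' w : (j <= j')%nat -> snmax j w <= snmax j' w.
Proof.
intros H. induction j; simpl. apply snmax_ge; lia.
apply Rmax_lub. apply IHj; lia. apply snmax_ge; lia.
Qed.

Lemma fconv_snmax u L : fconv u L -> forall j eps, 0 < eps ->
  exists N, forall k, (N <= k)%nat -> snmax j (vsub (u k) L) < eps.
Proof.
intros Hc j eps He. induction j.
- destruct (Hc 0%nat eps He) as [N HN]. exists N. intros. simpl. auto.
- destruct IHj as [N1 H1]. destruct (Hc (S j) eps He) as [N2 H2].
  exists (max N1 N2). intros k Hk. simpl. apply Rmax_lub_lt. apply H1; lia. apply H2; lia.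
Qed.

(* The positive cone is closed: the positive part of [z - L] has
   seminorms dominated by those of [u k - L]. *)
Lemma fconv_lb u L z : fconv u L -> (exists N, forall k, (N <= k)%nat -> vle z (u k)) -> vle z L.
Proof.
intros Hc [N HN]. apply vsubr_ge0_le.
set (d := vsub L z).
assert (Hd : forall j, sn j (vjoin (vopp d) vzero) = 0).
{ intros j. apply Rle_antisym; [|apply sn_ge0].
  apply Rnot_lt_le. intros Hlt. destruct (Hc j _ Hlt) as [N2 HN2].
  set (k := max N N2). specialize (HN2 k ltac:(lia)). specialize (HN k ltac:(lia)).
  assert (sn j (vjoin (vopp d) vzero) <= sn j (vsub (u k) L)); [|lra].
  apply sn_solid. rewrite vabs_id by apply vjoin_r.
  apply vle_trans with (vjoin (vsub (u k) L) vzero).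
  - apply vjoin_mono. unfold d. rewrite vsub_opp. unfold vsub. apply vle_add. exact HN.
  - apply vjoin_lub. apply vle_abs. apply vabs_ge0. }
apply sn_sep in Hd. apply vle_trans with (vadd d (vjoin (vopp d) vzero)).
- rewrite <- (vaddN E d) at 1. apply vle_addl. apply vjoin_l.
- rewrite Hd, vadd0. apply vle_refl.
Qed.
Lemma fconv_ub u L z : fconv u L -> (exists N, forall k, (N <= k)%nat -> vle (u k) z) -> vle L z.
Proof.
intros Hc HN. apply vsubr_ge0_le. apply (fconv_lb (fun k => vsub z (u k))).
- intros j eps He. destruct (Hc j eps He) as [N HN2]. exists N. intros k Hk.
  replace (vsub (vsub z (u k)) (vsub z L)) with (vsub L (u k)).
  + rewrite sn_sub_sym. auto.
  + symmetry. unfold vsub. rewrite vopp_add, vopp_vopp, vadd_swap, vaddN, vadd0l. apply vaddC.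
- destruct HN as [N HN]. exists N. intros. apply vle_subr_ge0. auto.
Qed.

Lemma fconv_unique u a b : fconv u a -> fconv u b -> a = b.
Proof.
intros Ha Hb. rewrite <- (vsub_add a b).
replace (vsub a b) with (@vzero E). apply vadd0l.
symmetry. apply sn_sep. intros j. apply Rle_antisym; [|apply sn_ge0]. apply Rnot_lt_le. intros Hlt.
destruct (Ha j (sn j (vsub a b) / 2)) as [N1 H1]. lra.
destruct (Hb j (sn j (vsub a b) / 2)) as [N2 H2]. lra.
specialize (H1 (max N1 N2) ltac:(lia)). specialize (H2 (max N1 N2) ltac:(lia)).
pose proof (sn_sub_triangle j a (u (max N1 N2)) b) as H. rewrite (sn_sub_sym j a (u _)) in H. lra.
Qed.

Fixpoint sum_abs (w : nat -> E) (m : nat) : E :=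
  match m with O => vzero | S k => vadd (sum_abs w k) (vabs (w k)) end.

Lemma sum_abs_ge0 (w : nat -> E) m : vle vzero (sum_abs w m).
Proof. induction m; simpl. apply vle_refl. rewrite <- (vadd0 E vzero). apply vle_add2; auto. apply vabs_ge0. Qed.
Lemma sum_abs_mono (w : nat -> E) m d : vle (sum_abs w m) (sum_abs w (m + d)).
Proof.
induction d. rewrite Nat.add_0_r. apply vle_refl.
replace (m + S d)%nat with (S (m + d)) by lia. simpl. apply vle_trans with (sum_abs w (m+d)); auto.
apply vle_addr_ge0. apply vabs_ge0.
Qed.
Lemma sum_abs_tail (w : nat -> E) i : (forall k, (i <= k)%nat -> sn i (w k) <= (/2)^k) ->
  forall m d, (i <= m)%nat -> sn i (vsub (sum_abs w (m + d)) (sum_abs w m)) <= 2 * (/2)^m - 2 * (/2)^(m+d).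
Proof.
intros Hw m d Hm. induction d.
- rewrite Nat.add_0_r, vsub_self, sn_zero. lra.
- replace (m + S d)%nat with (S (m + d)) by lia. simpl sum_abs.
  replace (vsub (vadd (sum_abs w (m + d)%nat) (vabs (w (m + d)%nat))) (sum_abs w m)) with
     (vadd (vsub (sum_abs w (m + d)%nat) (sum_abs w m)) (vabs (w (m + d)%nat))).
  2:{ unfold vsub. rewrite <- !vaddA. f_equal. apply vaddC. }
  eapply Rle_trans. apply sn_triangle. rewrite sn_abs.
  pose proof (Hw (m + d)%nat ltac:(lia)). simpl pow. lra.
Qed.

Lemma half_pow_small eps : 0 < eps -> exists N, forall n, (N <= n)%nat -> 2 * (/2)^n < eps.
Proof.
intros He. destruct (pow_lt_1_zero (/2) ltac:(rewrite Rabs_pos_eq; lra) (eps/2) ltac:(lra)) as [N HN].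
exists N. intros n Hn. specialize (HN n Hn). rewrite Rabs_pos_eq in HN. lra. apply pow_le. lra.
Qed.

(* Completeness: the partial sums of [|w k|] converge, and their limit
   dominates every [|w k|]. *)
Lemma fast_decay_majorant (w : nat -> E) : (forall i k, (i <= k)%nat -> sn i (w k) <= (/2)^k) ->
  exists s, forall m, vle (vabs (w m)) s.
Proof.
intros Hw. destruct (sn_complete E (sum_abs w)) as [s Hs].
- intros j eps He. destruct (half_pow_small eps He) as [N HN]. exists (max N j). intros m k Hm Hk.
  destruct (Nat.le_gt_cases k m) as [Hkm|Hkm].
  + replace m with (k + (m - k))%nat by lia. pose proof (sum_abs_tail w j (Hw j) k (m-k) ltac:(lia)).
    pose proof (HN k ltac:(lia)). pose proof (pow_le (/2) (k + (m-k))). lra.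
  + rewrite sn_sub_sym. replace k with (m + (k - m))%nat by lia.
    pose proof (sum_abs_tail w j (Hw j) m (k-m) ltac:(lia)).
    pose proof (HN m ltac:(lia)). pose proof (pow_le (/2) (m + (k-m))). lra.
- exists s. intros m. apply (fconv_lb (sum_abs w) s). exact Hs. exists (S m). intros k Hk.
  apply vle_trans with (sum_abs w (S m)).
  + simpl. rewrite <- (vadd0l (vabs (w m))) at 1. apply vle_add. apply sum_abs_ge0.
  + replace k with (S m + (k - S m))%nat by lia. apply sum_abs_mono.
Qed.

(* Automatic continuity: if no bound [N <= C snmax j] held, elements [w k] with
   [4^k snmax k (w k) < N (w k)], rescaled, would be dominated by a single [s],
   forcing [N s >= 2^k] for all k. *)
Lemma solid_homogeneous_bounded (N : E -> R) :
  (forall t w, N (vscal t w) = Rabs t * N w) ->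
  (forall w, N w <= N (vabs w)) ->
  (forall a b, vle vzero a -> vle a b -> N a <= N b) ->
  exists j C, 0 <= C /\ forall w, N w <= C * snmax j w.
Proof.
intros Nhom Nabs Nmono. apply NNPP. intros Hn.
assert (Hw : forall k, exists w, 4 ^ k * snmax k w < N w).
{ intros k. apply NNPP. intros H. apply Hn. exists k, (4^k). split. apply pow_le; lra.
  intros w. apply Rnot_lt_le. intros H2. apply H. exists w. exact H2. }
destruct (choice _ Hw) as [w Hwk].
assert (Hpos : forall k, 0 < N (w k)).
{ intros k. eapply Rle_lt_trans; [|apply Hwk]. apply Rmult_le_pos. apply pow_le; lra. apply snmax_ge0. }
assert (Hc : forall k, 0 <= 2^k / N (w k)).
{ intros k. apply Rmult_le_pos. apply pow_le; lra. left; apply Rinv_0_lt_compat; auto. }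
set (z := fun k => vscal (2^k / N (w k)) (vabs (w k))).
assert (Hz : forall i k, (i <= k)%nat -> sn i (z k) <= (/2)^k).
{ intros i k Hik. eapply Rle_trans. apply snmax_ge. exact Hik.
  unfold z. rewrite snmax_homog, snmax_abs, Rabs_pos_eq by apply Hc.
  specialize (Hwk k). specialize (Hpos k).
  assert (Hb : snmax k (w k) <= (/4)^k * N (w k)).
  { apply Rmult_le_reg_l with (4^k). apply pow_lt; lra.
    rewrite <- Rmult_assoc, <- Rpow_mult_distr. replace (4 * /4) with 1 by field. rewrite pow1. lra. }
  apply Rle_trans with (2^k / N (w k) * ((/4)^k * N (w k))).
  - apply Rmult_le_compat_l; [apply Hc | exact Hb].
  - right. replace ((/2)^k) with (2^k * (/4)^k) by (rewrite <- Rpow_mult_distr; f_equal; field).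
    field. lra. }
destruct (fast_decay_majorant z Hz) as [s Hs].
assert (Hz0 : forall k, vle vzero (z k)).
{ intros k. rewrite <- (vscal_zero (2^k / N (w k))). apply vle_scal. apply Hc. apply vabs_ge0. }
assert (Hk : forall k, 2 ^ k <= N s).
{ intros k. specialize (Hs k). rewrite vabs_id in Hs by apply Hz0.
  eapply Rle_trans; [|apply Nmono; [apply Hz0 | exact Hs]].
  unfold z. rewrite Nhom, Rabs_pos_eq by apply Hc. specialize (Hpos k).
  apply Rle_trans with (2 ^ k / N (w k) * N (w k)).
  - right. field. lra.
  - apply Rmult_le_compat_l. apply Hc. apply Nabs. }
destruct (Pow_x_infinity 2 ltac:(rewrite Rabs_pos_eq; lra) (N s + 1)) as [K HK].
specialize (HK K (le_n _)). specialize (Hk K). rewrite Rabs_pos_eq in HK. lra. apply pow_le; lra.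
Qed.

Lemma positive_functional_bounded (T : E -> R) :
  (forall a b, T (vadd a b) = T a + T b) -> (forall t a, T (vscal t a) = t * T a) ->
  (forall a, vle vzero a -> 0 <= T a) ->
  exists j C, 0 <= C /\ forall w, Rabs (T w) <= C * snmax j w.
Proof.
intros Tadd Tscal Tpos.
assert (Tmono : forall a b, vle a b -> T a <= T b).
{ intros a b H. apply vle_subr_ge0, Tpos in H. unfold vsub in H. rewrite Tadd, vopp_scal, Tscal in H. lra. }
apply solid_homogeneous_bounded.
- intros t w. rewrite Tscal. apply Rabs_mult.
- intros w. pose proof (Tmono _ _ (vle_abs w)). pose proof (Tmono _ _ (vle_opp_abs w)).
  rewrite vopp_scal, Tscal in H0. rewrite (Rabs_pos_eq (T (vabs w))) by (apply Tpos, vabs_ge0).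
  apply Rabs_le. lra.
- intros a b Ha Hab. rewrite !Rabs_pos_eq; auto. apply Tpos. eapply vle_trans; eauto.
Qed.

Lemma positive_functional_fconv_ge (T : E -> R) :
  (forall a b, T (vadd a b) = T a + T b) -> (forall t a, T (vscal t a) = t * T a) ->
  (forall a, vle vzero a -> 0 <= T a) ->
  forall u L t, fconv u L -> (forall k, t <= T (u k)) -> t <= T L.
Proof.
intros Tadd Tscal Tpos u L t Hc Hk.
destruct (positive_functional_bounded T Tadd Tscal Tpos) as [i [C [HC HT]]].
apply Rnot_lt_le. intros Hlt.
destruct (fconv_snmax u L Hc i ((t - T L) / (C + 1))) as [N HN]. apply Rdiv_lt_0_compat; lra.
specialize (HN N (le_n _)). specialize (HT (vsub (u N) L)). specialize (Hk N).
assert (ET : T (vsub (u N) L) = T (u N) - T L) by (unfold vsub; rewrite Tadd, vopp_scal, Tscal; ring).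
rewrite ET in HT.
assert (snmax i (vsub (u N) L) * (C+1) < t - T L).
{ apply Rmult_lt_reg_r with (/(C+1)). apply Rinv_0_lt_compat; lra.
  rewrite Rmult_assoc, Rinv_r by lra. unfold Rdiv in HN. lra. }
pose proof (snmax_ge0 i (vsub (u N) L)). pose proof (Rle_abs (T (u N) - T L)). nra.
Qed.

Context {F : FLat}.

Lemma positive_operator_bounded (T : E -> F) : linear_map T -> positive_map T ->
  forall j, exists i C, 0 <= C /\ forall w, sn j (T w) <= C * snmax i w.
Proof.
intros [Tadd Tscal] Tpos j.
assert (Tmono : forall a b, vle a b -> vle (T a) (T b)).
{ intros a b H. apply vsubr_ge0_le. apply vle_subr_ge0, Tpos in H.
  unfold vsub in H. rewrite Tadd, vopp_scal, Tscal, <- vopp_scal in H. exact H. }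
apply solid_homogeneous_bounded.
- intros t w. rewrite Tscal. apply sn_homog.
- intros w. apply sn_solid. rewrite (vabs_id (T (vabs w))) by (apply Tpos, vabs_ge0).
  apply vjoin_lub. apply Tmono, vle_abs.
  pose proof (Tmono _ _ (vle_opp_abs w)) as H. rewrite vopp_scal, Tscal, <- vopp_scal in H. exact H.
- intros a b Ha Hab. apply sn_solid. rewrite !vabs_id; auto. apply Tpos. eapply vle_trans; eauto.
Qed.

Lemma positive_operator_fconv (T : E -> F) : linear_map T -> positive_map T ->
  forall u L, fconv u L -> fconv (fun k => T (u k)) (T L).
Proof.
intros Tl Tp u L Hc j eps He. destruct (positive_operator_bounded T Tl Tp j) as [i [C [HC HT]]].
destruct (fconv_snmax u L Hc i (eps / (C + 1))) as [N HN]. apply Rdiv_lt_0_compat; lra.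
exists N. intros k Hk. destruct Tl as [Tadd Tscal].
assert (E1 : vsub (T (u k)) (T L) = T (vsub (u k) L)).
{ unfold vsub. rewrite Tadd, (vopp_scal L), Tscal, <- vopp_scal. reflexivity. }
rewrite E1. eapply Rle_lt_trans. apply HT. specialize (HN k Hk).
apply Rle_lt_trans with ((C + 1) * snmax i (vsub (u k) L)).
- pose proof (snmax_ge0 i (vsub (u k) L)). nra.
- apply Rmult_lt_reg_l with (/(C+1)). apply Rinv_0_lt_compat; lra.
  rewrite <- Rmult_assoc, Rinv_l by lra. unfold Rdiv in HN. lra.
Qed.
End FrechetLattice.

Lemma strictly_increasing_ge (phi : nat -> nat) :
  (forall k, (phi k < phi (S k))%nat) -> forall k, (k <= phi k)%nat.
Proof. intros H k. induction k. lia. specialize (H k). lia. Qed.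

(* [nested_subseq tau m] is the composition of the first [m] refinements,
   [tau s m] refining the subsequence [s] at stage [m]. *)
Fixpoint nested_subseq (tau : (nat -> nat) -> nat -> nat -> nat) (m : nat) : nat -> nat :=
  match m with
  | O => fun k => k
  | S m' => fun k => nested_subseq tau m' (tau (nested_subseq tau m') m' k)
  end.

Lemma nested_subseq_tail tau : (forall s m k, (tau s m k < tau s m (S k))%nat) ->
  forall d m k, exists i, (k <= i)%nat /\ nested_subseq tau (m + d) k = nested_subseq tau m i.
Proof.
intros Ht d. induction d; intros m k.
- exists k. rewrite Nat.add_0_r. split; auto.
- replace (m + S d)%nat with (S (m + d)) by lia. simpl.
  set (s := nested_subseq tau (m + d)).
  destruct (IHd m (tau s (m + d)%nat k)) as [i [Hi Ei]].
  exists i. split; [|exact Ei].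
  pose proof (strictly_increasing_ge _ (Ht s (m+d)%nat) k). lia.
Qed.

Lemma diagonal_subsequence (Y : nat -> FLat) (u : forall m, nat -> Y m) :
  (forall m (s : nat -> nat), exists phi : nat -> nat,
     (forall k, (phi k < phi (S k))%nat) /\ exists L, fconv (fun k => u m (s (phi k))) L) ->
  exists phi : nat -> nat, (forall j, (j <= phi j)%nat) /\
     forall m, exists L, fconv (fun j => u m (phi j)) L.
Proof.
intros Hsub.
destruct (choice (fun (sm : (nat -> nat) * nat) (phi : nat -> nat) =>
  (forall k, (phi k < phi (S k))%nat) /\
  exists L, fconv (fun k => u (snd sm) (fst sm (phi k))) L)) as [f Hf].
{ intros [s m]. apply Hsub. }
set (tau := fun s m => f (s, m)).
assert (Hinc : forall s m k, (tau s m k < tau s m (S k))%nat) by (intros s m; apply (Hf (s, m))).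
exists (fun j => nested_subseq tau j j). split.
- intros j. destruct (nested_subseq_tail tau Hinc j 0%nat j) as [i [Hi Ei]]. simpl in Ei. rewrite Ei. exact Hi.
- intros m. destruct (proj2 (Hf (nested_subseq tau m, m))) as [L HL]. exists L.
  intros i eps He. destruct (HL i eps He) as [N HN]. exists (max N (S m)). intros j Hj.
  destruct (nested_subseq_tail tau Hinc (j - S m)%nat (S m) j) as [k [Hk Ek]].
  replace (S m + (j - S m))%nat with j in Ek by lia. rewrite Ek. apply HN. lia.
Qed.

(** * Hahn-Banach extension of a superlinear minorant *)

Lemma Zorn_premaximal (T : Type) (t0 : T) (R : T -> T -> Prop) :
  (forall t, R t t) -> (forall r s t, R r s -> R s t -> R r t) ->
  (forall A : T -> Prop, (forall s t, A s -> A t -> R s t \/ R t s) ->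
     exists t, forall s, A s -> R s t) ->
  exists t, forall s, R t s -> R s t.
Proof.
intros Rrefl Rtrans Rchain.
pose (Rb := fun s t => boolp.asbool (R s t)).
assert (RbE : forall s t, Rb s t = true <-> R s t).
{ intros s t. symmetry. apply Bool.reflect_iff, boolp.asboolP. }
destruct (@classical_sets.ZL_preorder T t0 Rb) as [m Hm].
- intro t. apply RbE, Rrefl.
- intros r s t H1 H2. apply RbE. apply RbE in H1. apply RbE in H2. eauto.
- intros A HA. destruct (Rchain A) as [t Ht].
  + intros s t As At. destruct (HA s t As At) as [E|E]; [left|right]; apply RbE, E.
  + exists t. intros s As. apply RbE, Ht, As.
- exists m. intros s Hs. apply RbE, Hm, RbE, Hs.
Qed.

Section HahnBanach.
Context {V : VLat}.
Variable D : V -> Prop.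
Hypothesis D0 : D vzero.
Hypothesis Dadd : forall x y, D x -> D y -> D (vadd x y).
Hypothesis Dscal : forall t x, D x -> D (vscal t x).
Variable G : V -> R.
Hypothesis G_superadditive : forall x y, D x -> D y -> G x + G y <= G (vadd x y).
Hypothesis G_homogeneous : forall t x, 0 < t -> D x -> G (vscal t x) = t * G x.

Lemma G_zero : G vzero = 0.
Proof. pose proof (G_homogeneous 2 vzero ltac:(lra) D0) as H. rewrite vscal_zero in H. lra. Qed.

Definition partial_majorant (M : V -> Prop) (f : V -> R) : Prop :=
  M vzero /\ (forall x y, M x -> M y -> M (vadd x y)) /\ (forall t x, M x -> M (vscal t x)) /\
  (forall x, M x -> D x) /\
  (forall x y, M x -> M y -> f (vadd x y) = f x + f y) /\ (forall t x, M x -> f (vscal t x) = t * f x) /\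
  (forall x, M x -> G x <= f x).

Lemma decomposition_unique (M : V -> Prop) (Madd : forall x y, M x -> M y -> M (vadd x y))
  (Mscal : forall t x, M x -> M (vscal t x)) y1 : ~ M y1 ->
  forall d a d' a', M d -> M d' -> vadd d (vscal a y1) = vadd d' (vscal a' y1) -> a = a' /\ d = d'.
Proof.
intros Hn d a d' a' Hd Hd' E.
assert (E2 : vscal (a - a') y1 = vsub d' d).
{ apply (vadd_cancel _ _ (vadd d (vscal a' y1))). unfold vsub.
  rewrite vaddA, (vaddC V (vscal (a - a') y1) d), <- vaddA, <- vscalDl. replace (a - a' + a') with a by ring.
  rewrite E, <- vaddA, (vaddA _ (vopp d)), vaddNl, vadd0l. reflexivity. }
destruct (Req_dec a a') as [Ea|Ea].
- split; auto. subst a'. apply (vadd_cancel _ _ (vscal a y1)). exact E.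
- exfalso. apply Hn. replace y1 with (vscal (/(a - a')) (vsub d' d)).
  + apply Mscal. apply Madd; auto. rewrite vopp_scal. apply Mscal; auto.
  + rewrite <- E2, vscalA. replace (/ (a - a') * (a - a')) with 1 by (field; lra). apply vscal1.
Qed.

(* The two bounds on [c] say exactly that [G <= f + c] on positive and on
   negative multiples of [y1]; homogeneity of [G] reduces to these. *)
Lemma extension_dominates M f y1 c : partial_majorant M f -> D y1 ->
  (forall d, M d -> G (vadd d y1) - f d <= c) -> (forall d, M d -> c <= f d - G (vadd d (vopp y1))) ->
  forall d a, M d -> G (vadd d (vscal a y1)) <= f d + a * c.
Proof.
intros [_ [_ [Mscal [MD [_ [fscal fG]]]]]] Dy1 Hc1 Hc2 d a Hd.
destruct (Rtotal_order a 0) as [Ha|[Ha|Ha]].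
- set (b := - a). assert (Hb : 0 < b) by (unfold b; lra).
  replace (vadd d (vscal a y1)) with (vscal b (vadd (vscal (/b) d) (vopp y1))).
  + assert (DD : D (vadd (vscal (/b) d) (vopp y1))).
    { apply Dadd. apply MD, Mscal, Hd. rewrite vopp_scal. apply Dscal, Dy1. }
    rewrite G_homogeneous by auto.
    specialize (Hc2 (vscal (/b) d) (Mscal _ _ Hd)). rewrite fscal in Hc2; auto.
    replace (f d + a * c) with (b * (/b * f d - c)) by (unfold b; field; lra).
    apply Rmult_le_compat_l; lra.
  + rewrite vscalDr, vscalA, vscal_opp. replace (b * /b) with 1 by (field; lra).
    rewrite vscal1. unfold b. rewrite Ropp_involutive. reflexivity.
- subst a. rewrite vscal0, vadd0. replace (f d + 0 * c) with (f d) by ring. auto.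
- replace (vadd d (vscal a y1)) with (vscal a (vadd (vscal (/a) d) y1)).
  + assert (DD : D (vadd (vscal (/a) d) y1)) by (apply Dadd; auto; apply MD, Mscal, Hd).
    rewrite G_homogeneous by auto.
    specialize (Hc1 (vscal (/a) d) (Mscal _ _ Hd)). rewrite fscal in Hc1; auto.
    replace (f d + a * c) with (a * (/a * f d + c)) by (field; lra).
    apply Rmult_le_compat_l; lra.
  + rewrite vscalDr, vscalA. replace (a * /a) with 1 by (field; lra). rewrite vscal1. reflexivity.
Qed.

Lemma partial_majorant_extend_with M f : partial_majorant M f -> forall y1, D y1 -> ~ M y1 -> forall c,
  (forall d, M d -> G (vadd d y1) - f d <= c) -> (forall d, M d -> c <= f d - G (vadd d (vopp y1))) ->
  exists M' f', partial_majorant M' f' /\ (forall x, M x -> M' x) /\ (forall x, M x -> f' x = f x) /\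
    M' y1 /\ f' y1 = c.
Proof.
intros Hg y1 Dy1 Hn c Hc1 Hc2.
pose proof Hg as [M0 [Madd [Mscal [MD [fadd [fscal fG]]]]]].
pose proof (decomposition_unique M Madd Mscal y1 Hn) as Hu.
set (M' := fun z => exists d a, M d /\ z = vadd d (vscal a y1)).
set (f' := fun z => let da := epsilon (inhabits (vzero, 0))
                     (fun da => M (fst da) /\ z = vadd (fst da) (vscal (snd da) y1)) in
                   f (fst da) + snd da * c).
assert (Hf' : forall d a, M d -> f' (vadd d (vscal a y1)) = f d + a * c).
{ intros d a Hd. unfold f'. set (z := vadd d (vscal a y1)).
  pose proof (epsilon_spec (inhabits (vzero, 0))
    (fun da => M (fst da) /\ z = vadd (fst da) (vscal (snd da) y1)) (ex_intro _ (d, a) (conj Hd eq_refl))) as [H1 H2].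
  set (e := epsilon _ _) in *. destruct (Hu d a (fst e) (snd e) Hd H1 H2) as [Ea Ed].
  rewrite <- Ea, <- Ed. reflexivity. }
assert (f0 : f vzero = 0) by (pose proof (fscal 0 vzero M0) as H; rewrite vscal0 in H; lra).
exists M', f'. split; [|split; [|split; [|split]]].
- repeat split.
  + exists vzero, 0. split; auto. rewrite vscal0, vadd0. reflexivity.
  + intros x y [d [a [Hd ->]]] [d' [a' [Hd' ->]]]. exists (vadd d d'), (a + a'). split; auto.
    rewrite vscalDl. apply vadd_swap.
  + intros t x [d [a [Hd ->]]]. exists (vscal t d), (t * a). split; auto. rewrite vscalDr, vscalA. reflexivity.
  + intros x [d [a [Hd ->]]]. apply Dadd; auto.
  + intros x y [d [a [Hd ->]]] [d' [a' [Hd' ->]]].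
    rewrite vadd_swap, <- vscalDl, !Hf'; auto. rewrite fadd; auto. ring.
  + intros t x [d [a [Hd ->]]]. rewrite vscalDr, vscalA, !Hf'; auto. rewrite fscal; auto. ring.
  + intros x [d [a [Hd ->]]]. rewrite Hf'; auto. apply (extension_dominates M); auto.
- intros x Hx. exists x, 0. split; auto. rewrite vscal0, vadd0. reflexivity.
- intros x Hx. replace x with (vadd x (vscal 0 y1)) at 1 by (rewrite vscal0, vadd0; reflexivity).
  rewrite Hf'; auto. ring.
- exists vzero, 1. split; auto. rewrite vscal1, vadd0l. reflexivity.
- replace y1 with (vadd vzero (vscal 1 y1)) at 1 by (rewrite vscal1, vadd0l; reflexivity).
  rewrite Hf', f0; auto. ring.
Qed.

(* Superadditivity of [G] puts every lower bound [G (d + y1) - f d] below every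
   upper bound [f d' - G (d' - y1)], so a value [c] in between exists. *)
Lemma partial_majorant_extend M f : partial_majorant M f -> forall y1, D y1 -> ~ M y1 ->
  exists M' f', partial_majorant M' f' /\ (forall x, M x -> M' x) /\ (forall x, M x -> f' x = f x) /\ M' y1.
Proof.
intros Hg y1 Dy1 Hn.
pose proof Hg as [M0 [Madd [Mscal [MD [fadd [fscal fG]]]]]].
set (S := fun r => exists d, M d /\ r = G (vadd d y1) - f d).
assert (Hb : forall d d', M d -> M d' -> G (vadd d y1) - f d <= f d' - G (vadd d' (vopp y1))).
{ intros d d' Hd Hd'.
  assert (Dm : D (vopp y1)) by (rewrite vopp_scal; apply Dscal; auto).
  pose proof (G_superadditive (vadd d y1) (vadd d' (vopp y1))) as H.
  rewrite vadd_swap, vaddN, vadd0 in H.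
  pose proof (fG _ (Madd _ _ Hd Hd')) as H'. rewrite fadd in H'; auto.
  assert (G (vadd d y1) + G (vadd d' (vopp y1)) <= G (vadd d d')) by (apply H; apply Dadd; auto).
  lra. }
destruct (completeness S) as [c [Hc1 Hc2]].
- exists (f vzero - G (vadd vzero (vopp y1))). intros r [d [Hd ->]]. apply Hb; auto.
- exists (G (vadd vzero y1) - f vzero). exists vzero. split; auto.
- destruct (partial_majorant_extend_with M f Hg y1 Dy1 Hn c) as [M' [f' [H1 [H2 [H3 [H4 _]]]]]].
  + intros d Hd. apply Hc1. exists d; auto.
  + intros d Hd. apply Hc2. intros r [d' [Hd' ->]]. apply Hb; auto.
  + exists M', f'. auto.
Qed.

Variable x0 : V.
Hypothesis Dx0 : D x0.

Record majorant_at_x0 := { mdom : V -> Prop; mfun : V -> R;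
  mmaj : partial_majorant mdom mfun; mdom_x0 : mdom x0; mfun_x0 : mfun x0 = G x0 }.

Definition majorant_le (a b : majorant_at_x0) : Prop :=
  (forall x, mdom a x -> mdom b x) /\ (forall x, mdom a x -> mfun b x = mfun a x).

Lemma partial_majorant_x0 : exists M f, partial_majorant M f /\ M x0 /\ f x0 = G x0.
Proof.
assert (Hg0 : partial_majorant (fun z => z = vzero) (fun _ => 0)).
{ repeat split; intros; subst.
  - apply vadd0.
  - apply vscal_zero.
  - exact D0.
  - ring.
  - ring.
  - rewrite G_zero. lra. }
destruct (classic (x0 = vzero)) as [E|E].
- exists (fun z => z = vzero), (fun _ => 0). split; auto. split; auto. rewrite E, G_zero. reflexivity.
- destruct (partial_majorant_extend_with _ _ Hg0 x0 Dx0 E (G x0)) as [M [f [Hg [_ [_ [Hx Hfx]]]]]].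
  + intros d Hd. subst d. rewrite vadd0l. lra.
  + intros d Hd. subst d. rewrite vadd0l.
    pose proof (G_superadditive x0 (vopp x0) Dx0 ltac:(rewrite vopp_scal; apply Dscal; auto)) as H.
    rewrite vaddN, G_zero in H. lra.
  + exists M, f. auto.
Qed.

Lemma majorant_chain_ub (A : majorant_at_x0 -> Prop) :
  (forall s t, A s -> A t -> majorant_le s t \/ majorant_le t s) -> (exists a, A a) ->
  exists t, forall s, A s -> majorant_le s t.
Proof.
intros HA [a0 Ha0].
set (udom := fun x => exists a, A a /\ mdom a x).
set (ufn := fun x => mfun (epsilon (inhabits a0) (fun a => A a /\ mdom a x)) x).
assert (Key : forall a x, A a -> mdom a x -> ufn x = mfun a x).
{ intros a x Ha Hxa. unfold ufn.
  pose proof (epsilon_spec (inhabits a0) (fun a => A a /\ mdom a x) (ex_intro _ a (conj Ha Hxa))) as [H1 H2].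
  set (e := epsilon _ _) in *. destruct (HA a e Ha H1) as [[_ Q]|[_ Q]].
  - apply Q; auto.
  - symmetry. apply Q; auto. }
assert (Two : forall x y, udom x -> udom y -> exists c, A c /\ mdom c x /\ mdom c y).
{ intros x y [a [Ha Hxa]] [b [Hb Hyb]]. destruct (HA a b Ha Hb) as [[Q _]|[Q _]].
  - exists b. auto.
  - exists a. auto. }
assert (Hmaj : partial_majorant udom ufn).
{ repeat split.
  - exists a0. split; auto. apply (mmaj a0).
  - intros x y Hx Hy. destruct (Two x y Hx Hy) as [c [Hc [Q1 Q2]]]. exists c. split; auto. apply (mmaj c); auto.
  - intros t x [a [Ha Hxa]]. exists a. split; auto. apply (mmaj a); auto.
  - intros x [a [Ha Hxa]]. apply (mmaj a); auto.
  - intros x y Hx Hy. destruct (Two x y Hx Hy) as [c [Hc [Q1 Q2]]].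
    rewrite !(Key c); auto; apply (mmaj c); auto.
  - intros t x [a [Ha Hxa]]. rewrite !(Key a); auto; apply (mmaj a); auto.
  - intros x [a [Ha Hxa]]. rewrite (Key a); auto. apply (mmaj a); auto. }
assert (Hux : udom x0) by (exists a0; split; auto; apply mdom_x0).
assert (Hfx : ufn x0 = G x0) by (rewrite (Key a0); auto; [apply mfun_x0 | apply mdom_x0]).
exists (Build_majorant_at_x0 udom ufn Hmaj Hux Hfx). intros s Hs. split; simpl.
- intros x Hxs. exists s; auto.
- intros x Hxs. apply Key; auto.
Qed.

Lemma superlinear_linear_majorant : exists l : V -> R,
  (forall x y, D x -> D y -> l (vadd x y) = l x + l y) /\
  (forall t x, D x -> l (vscal t x) = t * l x) /\ (forall x, D x -> G x <= l x) /\ l x0 = G x0.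
Proof.
destruct partial_majorant_x0 as [M [f [Hg [Hx Hf]]]].
set (t0 := Build_majorant_at_x0 M f Hg Hx Hf).
destruct (Zorn_premaximal majorant_at_x0 t0 majorant_le) as [m Hm].
- intros a. split; auto.
- intros a b c [H1 H2] [H3 H4]. split; auto. intros x Hx'. rewrite H4, H2; auto.
- intros A HA. destruct (classic (exists a, A a)) as [Hne|Hne].
  + apply majorant_chain_ub; auto.
  + exists t0. intros s Hs. exfalso. apply Hne. exists s; auto.
- assert (Hall : forall y, D y -> mdom m y).
  { intros y Dy. apply NNPP. intros Hn.
    destruct (partial_majorant_extend (mdom m) (mfun m) (mmaj m) y Dy Hn) as [M' [f' [Hg' [Hs [Hfs Hy]]]]].
    assert (Hx' : M' x0) by (apply Hs; apply mdom_x0).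
    assert (Hf' : f' x0 = G x0) by (rewrite Hfs; [apply mfun_x0 | apply mdom_x0]).
    destruct (Hm (Build_majorant_at_x0 M' f' Hg' Hx' Hf')) as [Q1 _].
    - split; simpl; auto.
    - apply Hn. apply Q1. exact Hy. }
  exists (mfun m). destruct (mmaj m) as [_ [_ [_ [_ [Fa [Fs FG]]]]]].
  split; [|split; [|split]]; auto using mfun_x0.
Qed.
End HahnBanach.

Section SupremumFamily.
Context {V : VLat}.
Variable D : V -> Prop.
Hypothesis D0 : D vzero.
Hypothesis Dadd : forall x y, D x -> D y -> D (vadd x y).
Hypothesis Dscal : forall t x, D x -> D (vscal t x).
Variable Phi : V -> R -> Prop.
Hypothesis Phi_bounded : forall y, D y -> exists c, forall a, Phi y a -> a <= c.
Hypothesis Phi_superadditive : forall y z a b, D y -> D z -> Phi y a -> Phi z b ->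
  exists c, Phi (vadd y z) c /\ a + b <= c.
Hypothesis Phi_homogeneous : forall t y a, 0 < t -> D y -> Phi y a -> Phi (vscal t y) (t * a).

Lemma Rsup_family_superadditive y z : D y -> D z ->
  Ele (Eadd (Rsup (Phi y)) (Rsup (Phi z))) (Rsup (Phi (vadd y z))).
Proof.
intros Dy Dz. destruct (Phi_bounded y Dy) as [cy Hy]. destruct (Phi_bounded z Dz) as [cz Hz].
apply (Rsup_add _ _ _ cy cz Hy Hz). intros a b Ha Hb. apply Phi_superadditive; auto.
Qed.

Lemma Rsup_family_homogeneous t y : 0 < t -> D y -> Rsup (Phi (vscal t y)) = Escal t (Rsup (Phi y)).
Proof.
intros Ht Dy. apply Rsup_scal; auto.
- intros b Hb. exists (/t * b). split.
  + replace y with (vscal (/t) (vscal t y)).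
    * apply Phi_homogeneous; auto. apply Rinv_0_lt_compat; auto.
    * rewrite vscalA. replace (/t * t) with 1 by (field; lra). apply vscal1.
  + right. field. lra.
- intros a Ha. exists (t * a). split. apply Phi_homogeneous; auto. right. field. lra.
Qed.

Hypothesis Phi_nonempty : forall y, D y -> exists a, Phi y a.

Lemma family_linear_majorant x : D x -> exists l : V -> R,
  (forall y z, D y -> D z -> l (vadd y z) = l y + l z) /\
  (forall t y, D y -> l (vscal t y) = t * l y) /\
  (forall y a, D y -> Phi y a -> a <= l y) /\ Rsup (Phi x) = Fin (l x).
Proof.
intros Dx.
set (G := fun y => match Rsup (Phi y) with Fin s => s | _ => 0 end).
assert (HG : forall y, D y -> Rsup (Phi y) = Fin (G y) /\ forall a, Phi y a -> a <= G y).
{ intros y Dy. destruct (Phi_bounded y Dy) as [c Hc].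
  destruct (Rsup_fin (Phi y) c (Phi_nonempty y Dy) Hc) as [s [Hs Hub]].
  unfold G. rewrite Hs. auto. }
destruct (superlinear_linear_majorant D D0 Dadd Dscal G) with (x0 := x) as [l [L1 [L2 [L3 L4]]]]; auto.
- intros y z Dy Dz. pose proof (Rsup_family_superadditive y z Dy Dz) as H.
  rewrite (proj1 (HG y Dy)), (proj1 (HG z Dz)), (proj1 (HG _ (Dadd y z Dy Dz))) in H. exact H.
- intros t y Ht Dy. pose proof (Rsup_family_homogeneous t y Ht Dy) as H.
  rewrite (proj1 (HG y Dy)), (proj1 (HG _ (Dscal t y Dy))) in H. injection H. auto.
- exists l. split; [|split; [|split]]; auto.
  + intros y a Dy Ha. eapply Rle_trans; [apply (proj2 (HG y Dy)), Ha | apply L3, Dy].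
  + rewrite (proj1 (HG x Dx)), L4. reflexivity.
Qed.
End SupremumFamily.

(** * Projective limits *)

Section ProjectiveLimit.
Variable X : nat -> FLat.

Definition popp (x : Prod X) : Prod X := fun n => vopp (x n).
Definition pjoin (x y : Prod X) : Prod X := fun n => vjoin (x n) (y n).

Definition prod_vlat : VLat.
Proof.
refine {| vcar := Prod X; vzero := pzero X; vadd := padd X; vopp := popp; vscal := pscal X;
  vle := ple X; vjoin := pjoin |};
unfold padd, pscal, popp, pzero, ple, pjoin; intros;
try (apply functional_extensionality_dep; intro n).
- apply vaddA.
- apply vaddC.
- apply vadd0.
- apply vaddN.
- apply vscal1.
- apply vscalA.
- apply vscalDr.
- apply vscalDl.
- apply vle_refl.
- apply vle_antisym; auto.
- eapply vle_trans; eauto.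
- apply vle_add; auto.
- apply vle_scal; auto.
- apply vjoin_l.
- apply vjoin_r.
- apply vjoin_lub; auto.
Defined.

Variable p : forall n, X (S n) -> X n.
Hypothesis p_lin : forall n, linear_map (p n).
Hypothesis p_pos : forall n, positive_map (p n).

Lemma p_add n a b : p n (vadd a b) = vadd (p n a) (p n b).
Proof. apply (proj1 (p_lin n)). Qed.
Lemma p_scal n t a : p n (vscal t a) = vscal t (p n a).
Proof. apply (proj2 (p_lin n)). Qed.
Lemma p_mono n a b : vle a b -> vle (p n a) (p n b).
Proof.
intros H. apply vsubr_ge0_le. replace (vsub (p n b) (p n a)) with (p n (vsub b a)).
- apply p_pos, vle_subr_ge0, H.
- unfold vsub. rewrite p_add, vopp_scal, p_scal, <- vopp_scal. reflexivity.
Qed.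

Lemma in_lim_zero : in_lim X p (pzero X).
Proof. intro n. unfold pzero. rewrite <- (vscal0 (@vzero (X (S n)))), p_scal, vscal0. reflexivity. Qed.
Lemma in_lim_add x y : in_lim X p x -> in_lim X p y -> in_lim X p (padd X x y).
Proof. intros Hx Hy n. unfold padd. rewrite p_add, <- Hx, <- Hy. reflexivity. Qed.
Lemma in_lim_scal t x : in_lim X p x -> in_lim X p (pscal X t x).
Proof. intros Hx n. unfold pscal. rewrite p_scal, <- Hx. reflexivity. Qed.

Lemma in_lim_le_down x y k n : in_lim X p x -> in_lim X p y -> (k <= n)%nat ->
  vle (x n) (y n) -> vle (x k) (y k).
Proof.
intros Hx Hy Hkn. induction Hkn as [|n Hkn IH]; auto.
intros H. apply IH. rewrite (Hx n), (Hy n). apply p_mono, H.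
Qed.

Fixpoint down0 (n : nat) : X n -> X 0%nat :=
  match n return X n -> X 0%nat with
  | O => fun y => y
  | S m => fun y => down0 m (p m y)
  end.

Lemma down0_add n a b : down0 n (vadd a b) = vadd (down0 n a) (down0 n b).
Proof. induction n; simpl; auto. rewrite p_add. apply IHn. Qed.
Lemma down0_scal n t a : down0 n (vscal t a) = vscal t (down0 n a).
Proof. induction n; simpl; auto. rewrite p_scal. apply IHn. Qed.
Lemma down0_mono n a b : vle a b -> vle (down0 n a) (down0 n b).
Proof. induction n; simpl; auto. intros H. apply IHn, p_mono, H. Qed.
Lemma down0_in_lim n x : in_lim X p x -> down0 n (x n) = x 0%nat.
Proof. intros Hx. induction n; simpl; auto. rewrite <- Hx. exact IHn. Qed.

(* Positive linear maps between Fréchet lattices are continuous, so a limit at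
   level [m] is carried down to every lower level. *)
Lemma levelwise_limit (v : nat -> Prod X) nq : (forall j, in_lim X p (v j)) ->
  (forall m, exists L, fconv (fun j => v j (nq + m)%nat) L) ->
  exists h, in_lim X p h /\ pconv X v h.
Proof.
intros Hv Hconv.
assert (Hstep : forall m, (fun j => v j m) = (fun j => p m (v j (S m)))).
{ intros m. apply functional_extensionality. intros j. apply Hv. }
assert (Hall : forall n, exists L, fconv (fun j => v j n) L).
{ intros n. specialize (Hconv n). assert (Hle : (n <= nq + n)%nat) by lia.
  induction Hle as [|m Hle IH]; auto. apply IH. destruct Hconv as [L HL].
  exists (p m L). rewrite Hstep. apply positive_operator_fconv; auto. }
exists (fun n => proj1_sig (constructive_indefinite_description _ (Hall n))).
set (h := fun n => proj1_sig (constructive_indefinite_description _ (Hall n))).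
assert (Hh : forall n, fconv (fun j => v j n) (h n)).
{ intros n. exact (proj2_sig (constructive_indefinite_description _ (Hall n))). }
split; [|exact Hh].
intros n. apply (fconv_unique (fun j => v j n)). apply Hh.
rewrite Hstep. apply positive_operator_fconv; auto.
Qed.

Hypothesis p_reg : regular_lim X p.

Lemma in_lim_join x y : in_lim X p x -> in_lim X p y -> in_lim X p (pjoin x y).
Proof. intros Hx Hy n. unfold pjoin. rewrite p_reg, <- Hx, <- Hy. reflexivity. Qed.

Fixpoint running_join (x : Prod X) (g : nat -> Prod X) (m : nat) : Prod X :=
  match m with O => pjoin x (g 0%nat) | S m' => pjoin (running_join x g m') (g (S m')) end.

(* The diagonal [k |-> running_join x g k k] lies in the limit because
   [g (S k)] is already below [x] at level [k]. *)
Lemma common_upper_bound (x : Prod X) (g : nat -> Prod X) : in_lim X p x ->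
  (forall n, in_lim X p (g n)) -> (forall n, vle (g n n) (x n)) ->
  exists u, in_lim X p u /\ ple X x u /\ forall n, ple X (g n) u.
Proof.
intros Hx Hg Hgn.
assert (Hgk : forall n k, (k <= n)%nat -> vle (g n k) (x k)).
{ intros n k Hk. apply (in_lim_le_down (g n) x k n); auto. }
set (U := running_join x g).
assert (HUl : forall m, in_lim X p (U m)).
{ induction m; simpl; apply in_lim_join; auto. }
assert (HUx : forall m, ple X x (U m)).
{ induction m; intro k; simpl; unfold pjoin. apply vjoin_l. eapply vle_trans. apply IHm. apply vjoin_l. }
assert (HUg : forall d n, ple X (g n) (U (n + d)%nat)).
{ induction d; intros n k.
  - rewrite Nat.add_0_r. destruct n; simpl; unfold pjoin; apply vjoin_r.
  - replace (n + S d)%nat with (S (n + d)) by lia. simpl. unfold pjoin.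
    eapply vle_trans. apply IHd. apply vjoin_l. }
exists (fun k => U k k). split; [|split].
- intros k. rewrite <- (HUl (S k) k). simpl. unfold pjoin. symmetry. apply vjoin_idPl.
  eapply vle_trans. apply Hgk. lia. apply HUx.
- intros k. apply HUx.
- intros n k. destruct (Nat.le_gt_cases n k).
  + pose proof (HUg (k - n)%nat n k) as Hk. replace (n + (k - n))%nat with k in Hk by lia. exact Hk.
  + eapply vle_trans. apply Hgk. lia. apply HUx.
Qed.

Hypothesis p_red : reduced_lim X p.

Lemma lift_above n (h : Prod X) (y : X n) : in_lim X p h -> vle (h n) y ->
  exists x, in_lim X p x /\ x n = y /\ ple X h x.
Proof.
intros Hh Hle. destruct (p_red n (vsub y (h n))) as [w [Hw Hwn]].
set (w' := pjoin w (pzero X)).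
exists (padd X h w'). split; [|split].
- apply in_lim_add; auto. apply in_lim_join; auto. apply in_lim_zero.
- unfold padd, w', pjoin, pzero. rewrite Hwn, vjoin_idPl by (apply vle_subr_ge0, Hle).
  rewrite vaddC. apply vsub_add.
- intro k. unfold padd, w', pjoin, pzero. apply vle_addr_ge0, vjoin_r.
Qed.

(** * The supremal function *)

Variable X0 : Prod X -> Prop.
Hypothesis X0_sub : subspace X p X0.
Variable q1 : X 0%nat -> R.
Hypothesis q1_lin : (forall x y, q1 (vadd x y) = q1 x + q1 y) /\ (forall t x, q1 (vscal t x) = t * q1 x).
Hypothesis q1_pos : forall x, vle vzero x -> 0 <= q1 x.
Variable H : Prod X -> Prop.
Hypothesis H_cone : convex_cone X p H.
Hypothesis H_closed : seq_closed X p H.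

Definition q (x : Prod X) : R := q1 (x 0%nat).

Lemma q1_mono a b : vle a b -> q1 a <= q1 b.
Proof.
intros Hab. apply vle_subr_ge0, q1_pos in Hab. unfold vsub in Hab.
rewrite (proj1 q1_lin), vopp_scal, (proj2 q1_lin) in Hab. lra.
Qed.
Lemma q_add x y : q (padd X x y) = q x + q y.
Proof. apply (proj1 q1_lin). Qed.
Lemma q_scal t x : q (pscal X t x) = t * q x.
Proof. apply (proj2 q1_lin). Qed.
Lemma q_zero : q (pzero X) = 0.
Proof. unfold q, pzero. pose proof (proj2 q1_lin 0 vzero) as H0. rewrite vscal0 in H0. lra. Qed.
Lemma q_le_level n h y : in_lim X p h -> in_lim X p y -> vle (h n) (y n) -> q h <= q y.
Proof. intros Hh Hy Hle. apply q1_mono, (in_lim_le_down h y 0 n); auto. lia. Qed.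

Lemma X0_in_lim y : X0 y -> in_lim X p y.
Proof. apply (proj1 X0_sub). Qed.
Lemma X0_zero : X0 (pzero X).
Proof. apply (proj1 (proj2 X0_sub)). Qed.
Lemma X0_add y z : X0 y -> X0 z -> X0 (padd X y z).
Proof. apply (proj1 (proj2 (proj2 X0_sub))). Qed.
Lemma X0_scal t y : X0 y -> X0 (pscal X t y).
Proof. apply (proj2 (proj2 (proj2 X0_sub))). Qed.

Lemma H_in_lim h : H h -> in_lim X p h.
Proof. apply (proj1 H_cone). Qed.
Lemma H_scal t h : 0 < t -> H h -> H (pscal X t h).
Proof. apply (proj1 (proj2 H_cone)). Qed.
Lemma H_add a b : H a -> H b -> H (padd X a b).
Proof.
intros Ha Hb. pose proof (proj2 (proj2 H_cone) (/2) a b ltac:(lra) Ha Hb) as Hc.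
apply (H_scal 2) in Hc; [|lra].
replace (padd X a b) with (pscal X 2 (padd X (pscal X (/ 2) a) (pscal X (1 - / 2) b))); auto.
change (@vscal (prod_vlat) 2 (@vadd prod_vlat (@vscal prod_vlat (/2) a) (@vscal prod_vlat (1 - /2) b))
  = @vadd prod_vlat a b).
rewrite vscalDr, !vscalA. replace (2 * /2) with 1 by field. replace (2 * (1 - /2)) with 1 by field.
rewrite !vscal1. reflexivity.
Qed.

Lemma H_zero : (exists h, H h) -> H (pzero X).
Proof.
intros [h0 Hh0].
apply (H_closed (fun k => pscal X (/ (INR k + 1)) h0)).
- intros k. apply H_scal; auto. apply Rinv_0_lt_compat. pose proof (pos_INR k). lra.
- apply in_lim_zero.
- intros n j eps He. unfold pscal, pzero.
  destruct (INR_unbounded (sn j (h0 n) / eps)) as [N HN].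
  exists N. intros k Hk. apply le_INR in Hk. pose proof (pos_INR k) as Hk0.
  rewrite vsub0, sn_homog, Rabs_pos_eq by (left; apply Rinv_0_lt_compat; lra).
  assert (Hlt : sn j (h0 n) < eps * (INR k + 1)).
  { apply Rmult_lt_reg_r with (/eps). apply Rinv_0_lt_compat; auto.
    replace (eps * (INR k + 1) * / eps) with (INR k + 1) by (field; lra). unfold Rdiv in HN. lra. }
  apply Rmult_lt_reg_l with (INR k + 1). lra.
  replace ((INR k + 1) * (/ (INR k + 1) * sn j (h0 n))) with (sn j (h0 n)) by (field; lra). lra.
Qed.

Definition spf_set (x : Prod X) (a : R) : Prop := exists h, H h /\ ple X h x /\ a = q h.

Lemma spf_Rsup x : spf X H q x = Rsup (spf_set x).
Proof.
unfold spf, Rsup. f_equal. apply functional_extensionality. intros e.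
apply propositional_extensionality. split.
- intros [h [Hh [Hle ->]]]. exists (q h). split; auto. exists h; auto.
- intros [a [[h [Hh [Hle ->]]] ->]]. exists h; auto.
Qed.

Lemma spf_superlinear_pos : (exists h, H h) -> superlinear_pos X p (spf X H q).
Proof.
intros Hne. pose proof (H_zero Hne) as H0.
assert (Hbd : forall y, in_lim X p y -> exists c, forall a, spf_set y a -> a <= c).
{ intros y Hy. exists (q y). intros a [h [Hh [Hle ->]]]. apply q1_mono, Hle. }
split; [|split; [|split; [|split]]].
- intros x Hx. rewrite spf_Rsup. destruct (Hbd x Hx) as [c Hc]. apply (Rsup_not_PInf _ c Hc).
- intros x y Hx Hy. rewrite !spf_Rsup.
  apply (@Rsup_family_superadditive prod_vlat (in_lim X p) spf_set Hbd); auto.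
  intros y' z' a b _ _ [h [Hh [Hle ->]]] [h' [Hh' [Hle' ->]]].
  exists (q (padd X h h')). split; [|rewrite q_add; lra].
  exists (padd X h h'). split; [apply H_add; auto | split; auto]. intros n. apply vle_add2; auto.
- intros t x Ht Hx. rewrite !spf_Rsup.
  apply (@Rsup_family_homogeneous prod_vlat (in_lim X p) in_lim_scal spf_set); auto.
  intros t' y a Ht' _ [h [Hh [Hle ->]]]. exists (pscal X t' h). split; [apply H_scal; auto|].
  split; [|rewrite q_scal; reflexivity]. intros n. apply vle_scal; auto. lra.
- rewrite spf_Rsup. destruct (Rsup_fin (spf_set (pzero X)) 0) as [s [Hs _]].
  + exists (q (pzero X)), (pzero X). split; auto. split; auto. intro n; apply vle_refl.
  + intros a [h [Hh [Hle ->]]]. rewrite <- q_zero. apply q1_mono, Hle.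
  + exists s. exact Hs.
- intros x Hx Hpos. rewrite spf_Rsup, <- q_zero. apply Rsup_ub. exists (pzero X). auto.
Qed.

Hypothesis hyp_iii : forall B : Prod X -> Prop,
  (forall b, B b -> H b) -> at_most_countable X B ->
  (exists u, in_lim X p u /\ forall b, B b -> ple X b u) ->
  (exists c, forall b, B b -> c <= q1 (b 0%nat)) ->
  exists nq, forall n, (nq <= n)%nat -> seq_precompact (proj X n B).

Lemma levelwise_below_limit x t : in_lim X p x ->
  (forall n, exists h, H h /\ t <= q h /\ vle (h n) (x n)) ->
  exists h, H h /\ ple X h x /\ t <= q h.
Proof.
intros Hx Hn. destruct (choice _ Hn) as [g Hg].
assert (Hgl : forall n, in_lim X p (g n)) by (intros n; apply H_in_lim, Hg).
assert (Hgk : forall n k, (k <= n)%nat -> vle (g n k) (x k)).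
{ intros n k Hk. apply (in_lim_le_down (g n) x k n); auto. apply Hg. }
destruct (common_upper_bound x g Hx Hgl) as [u [Hu [_ Hgu]]]. { intros n. apply Hg. }
destruct (hyp_iii (fun b => exists n, b = g n)) as [nq Hnq].
- intros b [n ->]. apply Hg.
- exists g. intros b [n ->]. exists n; auto.
- exists u. split; auto. intros b [n ->]. apply Hgu.
- exists t. intros b [n ->]. apply Hg.
- destruct (diagonal_subsequence (fun m => X (nq + m)%nat) (fun m k => g k (nq + m)%nat))
    as [phi [Hphi Hconv]].
  { intros m s. destruct (Hnq (nq + m)%nat ltac:(lia) (fun k => g (s k) (nq + m)%nat)) as [phi [L [H1 H2]]].
    - intros k. exists (g (s k)). split; auto. exists (s k); auto.
    - exists phi. split; auto. exists L. exact H2. }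
  destruct (levelwise_limit (fun j => g (phi j)) nq) as [h [Hh Hlim]]; auto.
  exists h. split; [|split].
  + apply (H_closed (fun j => g (phi j))); auto. intros k. apply Hg.
  + intros k. apply (fconv_ub (fun j => g (phi j) k)). apply Hlim.
    exists k. intros j Hj. apply Hgk. pose proof (Hphi j). lia.
  + apply (positive_functional_fconv_ge q1 (proj1 q1_lin) (proj2 q1_lin) q1_pos (fun j => g (phi j) 0%nat)).
    apply Hlim. intros k. apply Hg.
Qed.

Lemma spf_level_bound x r : in_lim X p x -> Elt (spf X H q x) (Fin r) ->
  exists n t, t < r /\ forall h, H h -> vle (h n) (x n) -> q h <= t.
Proof.
intros Hx Hlt. rewrite spf_Rsup in Hlt. destruct (Rsup_lt _ _ Hlt) as [t0 [Ht0 Hall]].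
set (t := (t0 + r) / 2).
destruct (classic (exists n, forall h, H h -> vle (h n) (x n) -> q h <= t)) as [[n Hn]|Hne].
- exists n, t. split; auto. unfold t; lra.
- exfalso. destruct (levelwise_below_limit x t Hx) as [h [Hh [Hle Hq]]].
  + intros n. apply NNPP. intros Hn. apply Hne. exists n. intros h Hh Hle.
    apply Rnot_lt_le. intros Hq. apply Hn. exists h. split; auto. split; auto. lra.
  + assert (q h <= t0) by (apply Hall; exists h; auto). unfold t in Hq. lra.
Qed.

(** * Duality *)

Definition admissible (l : Prod X -> R) : Prop :=
  (forall y z, X0 y -> X0 z -> l (padd X y z) = l y + l z) /\
  (forall t y, X0 y -> l (pscal X t y) = t * l y) /\
  (forall y, X0 y -> ple X (pzero X) y -> 0 <= l y) /\
  (forall h x', H h -> X0 x' -> ple X h x' -> q1 (h 0%nat) <= l x').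

Lemma admissible_of_family (Phi : Prod X -> R -> Prop) x r : (exists h, H h) -> X0 x ->
  (forall y, X0 y -> exists a, Phi y a) ->
  (forall y, X0 y -> exists c, forall a, Phi y a -> a <= c) ->
  (forall y z a b, X0 y -> X0 z -> Phi y a -> Phi z b -> exists c, Phi (padd X y z) c /\ a + b <= c) ->
  (forall t y a, 0 < t -> X0 y -> Phi y a -> Phi (pscal X t y) (t * a)) ->
  (forall h y, H h -> X0 y -> ple X h y -> exists a, Phi y a /\ q h <= a) ->
  (forall a, Phi x a -> a <= r) ->
  exists l, admissible l /\ l x <= r.
Proof.
intros Hne Hx Pne Pbd Padd Pscal Pq Pr.
destruct (@family_linear_majorant prod_vlat X0 X0_zero X0_add X0_scal Phi Pbd Padd Pscal Pne x Hx)
  as [l [L1 [L2 [L3 L4]]]].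
assert (Hq : forall h y, H h -> X0 y -> ple X h y -> q h <= l y).
{ intros h y Hh Hy Hle. destruct (Pq h y Hh Hy Hle) as [a [Ha Hqa]]. eapply Rle_trans; eauto. }
exists l. split; [split; [|split; [|split]]|]; auto.
- intros y Hy Hpos. rewrite <- q_zero. apply Hq; auto. apply H_zero, Hne.
- pose proof (Rsup_le _ r Pr) as Hle. rewrite L4 in Hle. exact Hle.
Qed.

Lemma admissible_bound_minorizing n x t : (exists h, H h) -> X0 x -> minorizing X n H X0 ->
  (forall h, H h -> vle (h n) (x n) -> q h <= t) -> exists l, admissible l /\ l x <= t.
Proof.
intros Hne Hx Hmin Ht.
apply (admissible_of_family (fun y a => exists h, H h /\ vle (h n) (y n) /\ a = q h)); auto.
- intros y Hy. destruct (Hmin (y n)) as [h' [[h [Hh <-]] Hle]]. exists y; auto. exists (q h), h. auto.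
- intros y Hy. exists (q y). intros a [h [Hh [Hle ->]]]. apply (q_le_level n); auto using H_in_lim, X0_in_lim.
- intros y z a b _ _ [h [Hh [Hle ->]]] [h' [Hh' [Hle' ->]]]. exists (q (padd X h h')).
  split; [|rewrite q_add; lra]. exists (padd X h h'). split; [apply H_add; auto|]. split; auto.
  apply vle_add2; auto.
- intros s y a Hs _ [h [Hh [Hle ->]]]. exists (pscal X s h). split; [apply H_scal; auto|].
  split; [|rewrite q_scal; reflexivity]. apply vle_scal; auto. lra.
- intros h y Hh _ Hle. exists (q h). split; [|lra]. exists h. auto.
- intros a [h [Hh [Hle ->]]]. auto.
Qed.

Lemma sup_proj_ge n z h : in_lim X p z -> H h -> vle (h n) (z n) ->
  Ele (Fin (q h)) (sup_proj X p H q n (z n)).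
Proof.
intros Hz Hh Hle. destruct (lift_above n h (z n) (H_in_lim h Hh) Hle) as [x' [Hx' [Ex' Hhx']]].
apply Ele_trans with (spf X H q x').
- rewrite spf_Rsup. apply Rsup_ub. exists h. auto.
- apply Esup_ub. exists x'. auto.
Qed.

Lemma sup_proj_le n x t : (forall h, H h -> vle (h n) (x n) -> q h <= t) ->
  Ele (sup_proj X p H q n (x n)) (Fin t).
Proof.
intros Ht. apply Esup_lub. intros a [x' [Hx' [Ex' ->]]]. rewrite spf_Rsup. apply Rsup_le.
intros b [h [Hh [Hle ->]]]. apply Ht; auto. rewrite <- Ex'. apply Hle.
Qed.

Lemma q_level_bound n : exists i C, 0 <= C /\ forall J, (i <= J)%nat ->
  forall h z, H h -> vle (h n) z -> q h <= C * snmax J z.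
Proof.
set (T := fun w : X n => q1 (down0 n w)).
assert (T0 : down0 n vzero = vzero).
{ rewrite <- (vscal0 (@vzero (X n))), down0_scal. apply vscal0. }
destruct (positive_functional_bounded T) as [i [C [HC HT]]].
- intros a b. unfold T. rewrite down0_add. apply q1_lin.
- intros t a. unfold T. rewrite down0_scal. apply q1_lin.
- intros a Ha. apply q1_pos. rewrite <- T0. apply down0_mono, Ha.
- exists i, C. split; auto. intros J HJ h z Hh Hle.
  unfold q. rewrite <- (down0_in_lim n h (H_in_lim h Hh)).
  apply Rle_trans with (T z); [apply q1_mono, down0_mono, Hle|].
  eapply Rle_trans; [apply Rle_abs|]. eapply Rle_trans; [apply HT|].
  apply Rmult_le_compat_l; auto. apply snmax_mono, HJ.
Qed.

(** * The penalized minorant of case (ii) *)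

Definition penalized_set n J M (y : Prod X) (a : R) : Prop :=
  exists h z, H h /\ X0 z /\ vle (h n) (z n) /\ a = q h - M * snmax J (vsub (y n) (z n)).

Lemma penalty_bound n J C M y h z : (forall h z, H h -> vle (h n) z -> q h <= C * snmax J z) ->
  0 <= C -> H h -> vle (h n) (z n) ->
  q h - M * snmax J (vsub (y n) (z n)) <= C * snmax J (y n) - (M - C) * snmax J (vsub (z n) (y n)).
Proof.
intros Hq HC Hh Hle. pose proof (Hq h (z n) Hh Hle) as Hqh.
pose proof (snmax_triangle J (vsub (z n) (y n)) (y n)) as Htri. rewrite vsub_add in Htri.
rewrite snmax_sub_sym. nra.
Qed.

Lemma penalized_set_superadditive n J M y z a b : 0 <= M ->
  penalized_set n J M y a -> penalized_set n J M z b ->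
  exists c, penalized_set n J M (padd X y z) c /\ a + b <= c.
Proof.
intros HM [h [z1 [Hh [Hz1 [Hle1 ->]]]]] [h' [z2 [Hh' [Hz2 [Hle2 ->]]]]].
exists (q (padd X h h') - M * snmax J (vsub (padd X y z n) (padd X z1 z2 n))). split.
- exists (padd X h h'), (padd X z1 z2). split; [apply H_add; auto|]. split; [apply X0_add; auto|].
  split; auto. apply vle_add2; auto.
- rewrite q_add. unfold padd. rewrite vsub_addsub.
  pose proof (snmax_triangle J (vsub (y n) (z1 n)) (vsub (z n) (z2 n))). nra.
Qed.

Lemma penalized_set_homogeneous n J M t y a : 0 < t ->
  penalized_set n J M y a -> penalized_set n J M (pscal X t y) (t * a).
Proof.
intros Ht [h [z [Hh [Hz [Hle ->]]]]]. exists (pscal X t h), (pscal X t z).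
split; [apply H_scal; auto|]. split; [apply X0_scal; auto|]. split.
- apply vle_scal; auto. lra.
- rewrite q_scal. unfold pscal. rewrite <- vscal_sub, snmax_homog, Rabs_pos_eq by lra. ring.
Qed.

(* Near [x] the upper semicontinuity bounds [q h]; far from [x] the penalty
   [M * snmax J (x n - z n) >= M * eps] absorbs the linear growth of [q]. *)
Lemma admissible_bound_usc n x r : (exists h, H h) -> X0 x ->
  usc_on (proj X n X0) (sup_proj X p H q n) -> Elt (sup_proj X p H q n (x n)) (Fin r) ->
  exists l, admissible l /\ l x <= r.
Proof.
intros Hne Hx Husc Hlt.
destruct (Husc (x n) (ex_intro _ x (conj Hx eq_refl)) r Hlt) as [j [eps [Heps Hnb]]].
destruct (q_level_bound n) as [i [C [HC Hq]]].
set (J := max i j).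
assert (HqJ : forall h z, H h -> vle (h n) z -> q h <= C * snmax J z) by (apply Hq; unfold J; lia).
set (M := C + Rabs (C * snmax J (x n) - r) / eps + 1).
assert (HM : (M - C) * eps = Rabs (C * snmax J (x n) - r) + eps) by (unfold M; field; lra).
assert (HMC : C <= M).
{ assert (0 <= (M - C) * eps) by (rewrite HM; pose proof (Rabs_pos (C * snmax J (x n) - r)); lra). nra. }
apply (admissible_of_family (penalized_set n J M)); auto.
- intros y Hy. exists (q (pzero X) - M * snmax J (vsub (y n) (pzero X n))), (pzero X), (pzero X).
  split; [apply H_zero, Hne|]. split; [apply X0_zero|]. split; auto. apply vle_refl.
- intros y Hy. exists (C * snmax J (y n)). intros a [h [z [Hh [Hz [Hle ->]]]]].
  pose proof (penalty_bound n J C M y h z HqJ HC Hh Hle).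
  pose proof (snmax_ge0 J (vsub (z n) (y n))). nra.
- intros y z a b _ _. apply penalized_set_superadditive. lra.
- intros t y a Ht _. apply penalized_set_homogeneous, Ht.
- intros h y Hh Hy Hle. exists (q h). split; [|lra]. exists h, y.
  split; auto. split; auto. split; [apply Hle|]. rewrite vsub_self, snmax_zero. ring.
- intros a [h [z [Hh [Hz [Hle ->]]]]].
  pose proof (snmax_ge0 J (vsub (x n) (z n))).
  destruct (classic (in_nbhd j eps (x n) (z n))) as [Hin|Hout].
  + assert (Hqr : q h < r).
    { apply Elt_Fin. eapply Ele_Elt_trans.
      - apply (sup_proj_ge n z h); auto. apply X0_in_lim, Hz.
      - apply Hnb; auto. exists z. auto. }
    nra.
  + assert (Hfar : eps <= snmax J (vsub (z n) (x n))).
    { apply Rnot_lt_le. intros Hr. apply Hout. intros i' Hi'. eapply Rle_lt_trans; [|exact Hr].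
      apply snmax_ge. unfold J; lia. }
    pose proof (penalty_bound n J C M x h z HqJ HC Hh Hle).
    pose proof (Rle_abs (C * snmax J (x n) - r)). nra.
Qed.

Hypothesis hyp_i_ii : forall n,
  minorizing X n H X0 \/ usc_on (proj X n X0) (sup_proj X p H q n).

Lemma admissible_below_spf x r : (exists h, H h) -> X0 x -> Elt (spf X H q x) (Fin r) ->
  exists l, admissible l /\ l x <= r.
Proof.
intros Hne Hx Hlt. destruct (spf_level_bound x r (X0_in_lim x Hx) Hlt) as [n [t [Htr Hn]]].
destruct (hyp_i_ii n) as [Hmin|Husc].
- destruct (admissible_bound_minorizing n x t Hne Hx Hmin Hn) as [l [Hl Hlx]].
  exists l. split; auto. lra.
- apply (admissible_bound_usc n x r Hne Hx Husc). eapply Ele_Elt_trans.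
  + apply (sup_proj_le n x t Hn).
  + split. simpl; lra. intros E; injection E; lra.
Qed.

Lemma spf_eq_Einf_admissible x : (exists h, H h) -> X0 x ->
  spf X H q x = Einf (fun a => exists l, admissible l /\ a = Fin (l x)).
Proof.
intros Hne Hx. apply Ele_antisym.
- apply Einf_glb. intros a [l [[_ [_ [_ Hl]]] ->]]. rewrite spf_Rsup. apply Rsup_le.
  intros b [h [Hh [Hle ->]]]. apply Hl; auto.
- apply Ele_of_forall_Elt.
  + apply (proj1 (spf_superlinear_pos Hne)), X0_in_lim, Hx.
  + intros r Hr. destruct (admissible_below_spf x r Hne Hx Hr) as [l [Hl Hlx]].
    eapply Ele_trans; [apply Einf_lb; exists l; eauto | exact Hlx].
Qed.
End ProjectiveLimit.

Theorem mainTheorem11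
  (X : nat -> FLat) (p : forall n, X (S n) -> X n)
  (p_lin : forall n, linear_map (p n))
  (p_pos : forall n, positive_map (p n))
  (p_reg : regular_lim X p)
  (p_red : reduced_lim X p)
  (X0 : Prod X -> Prop) (X0_sub : subspace X p X0)
  (q1 : X 0%nat -> R)
  (q1_lin : (forall x y, q1 (vadd x y) = q1 x + q1 y) /\
            (forall t x, q1 (vscal t x) = t * q1 x))
  (q1_pos : forall x, vle vzero x -> 0 <= q1 x)
  (H : Prod X -> Prop) (H_cone : convex_cone X p H)
  (H_closed : seq_closed X p H)
  (H_neg : exists h, H h /\ ple X h (pzero X))
  (hyp_i_ii : forall n,
      minorizing X n H X0 \/
      usc_on (proj X n X0) (sup_proj X p H (fun x => q1 (x 0%nat)) n))
  (hyp_iii : forall B : Prod X -> Prop,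
      (forall b, B b -> H b) -> at_most_countable X B ->
      (exists u, in_lim X p u /\ forall b, B b -> ple X b u) ->
      (exists c, forall b, B b -> c <= q1 (b 0%nat)) ->
      exists nq, forall n, (nq <= n)%nat -> seq_precompact (proj X n B)) :
  superlinear_pos X p (spf X H (fun x => q1 (x 0%nat))) /\
  forall x, X0 x ->
    spf X H (fun x => q1 (x 0%nat)) x =
    Einf (fun a => exists l : Prod X -> R,
      (forall y z, X0 y -> X0 z -> l (padd X y z) = l y + l z) /\
      (forall t y, X0 y -> l (pscal X t y) = t * l y) /\
      (forall y, X0 y -> ple X (pzero X) y -> 0 <= l y) /\
      (forall h x', H h -> X0 x' -> ple X h x' -> q1 (h 0%nat) <= l x') /\
      a = Fin (l x)).
Proof.
assert (Hne : exists h, H h) by (destruct H_neg as [h [Hh _]]; exists h; exact Hh).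
split.
- apply spf_superlinear_pos; auto.
- intros x Hx.
  change (spf X H (fun x => q1 (x 0%nat)) x) with (spf X H (q X q1) x).
  erewrite spf_eq_Einf_admissible; eauto.
  f_equal. apply functional_extensionality. intros a. apply propositional_extensionality.
  unfold admissible. split; intros [l Hl]; exists l; tauto.
Qed.
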